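(* Let $Z_2=(X_2,Y_2)$ be the PSVF with $X_2(x,y)=(1,\frac x2-4x^3)$ for $y\ge0$, $Y_2(x,y)=(-1,\frac x2-4x^3)$ for $y\le0$, and $\Lambda_2=\{(x,\pm(\frac{x^2}{4}-x^4)):-\frac12\le x\le\frac12\}$. Let $\widetilde Z$ be any planar PSVF presenting a $1$-homoclinic loop, and let $\widetilde\Lambda$ be the set formed by this loop. Then $Z_2$ restricted to $\Lambda_2$ and $\widetilde Z$ restricted to $\widetilde\Lambda$ are $\Sigma$-equivalent.
   Context: A planar PSVF $Z=(X,Y)$ with switching manifold $\Sigma=f^{-1}(0)$ ($f$ smooth, $0$ a regular value) equals the smooth field $X$ on $\Sigma^+=\{f\ge0\}$ and $Y$ on $\Sigma^-=\{f\le0\}$ (for $Z_2$, $f(x,y)=y$). With $Wf=\langle\nabla f,W\rangle$, $W^2f=\langle\nabla(Wf),W\rangle$: crossing (sewing) points are $p\in\Sigma$ with $Xf(p)Yf(p)>0$; sliding region $\{Xf<0<Yf\}$, escaping $\{Yf<0<Xf\}$, with sliding field $Z^T=(Yf\,X-Xf\,Y)/(Yf-Xf)$ there. A point $p\in\Sigma$ is a fold of $X$ if $Xf(p)=0\neq X^2f(p)$, visible if $X^2f(p)>0$; a fold of $Y$ is visible if the $Y$-orbit of $p$ lies locally in $\Sigma^-$ ($Y^2f(p)<0$); a visible-visible two-fold is a visible fold of both. Trajectories follow the Filippov convention: off $\Sigma$ follow $X$ or $Y$; at crossing points pass from one side to the other; at escaping/sliding points use $Z^T$ backward/forward and any of $X,Y,Z^T$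 in the other time direction; at a regular tangency (not invisible for both fields) choose any of $X,Y,Z^T$ backward and forward; a global trajectory is a bi-infinite orientation-preserving concatenation of such local trajectories defined for all $t\in\mathbb{R}$. A $k$-homoclinic loop ($k\ge1$) is a global trajectory of $Z$ presenting $k$ distinct visible-visible two-folds $p_1,\dots,p_k$ such that, after passing through $p_i$, the trajectory reaches $\Sigma$ either at $p_{i-1}$ or at $p_{i+1}$ for $i=2,\dots,k-1$; for $i=1$ (resp. $i=k$), after passing through $p_i$ it reaches $\Sigma$ either at a sewing point or at $p_{i+1}$ (resp. $p_{i-1}$). $\Sigma$-equivalence of restrictions: $Z|_\Lambda$ and $\widetilde Z|_{\widetilde\Lambda}$ are $\Sigma$-equivalent if there is an orientation-preserving homeomorphism $h:\Lambda\to\widetilde\Lambda$ sending $\Lambda\cap\Sigma$ onto $\widetilde\Lambda\cap\widetilde\Sigma$, orbits of $X$ in $\Lambda\cap\Sigma^+$ onto orbits of $\widetilde X$ in $\widetilde\Lambda\cap\widetilde\Sigma^+$, orbits of $Y$ in $\Lambda\cap\Sigma^-$ onto orbits of $\widetilde Y$ in $\widetilde\Lambda\cap\widetilde\Sigma^-$, and orbits of $Z^T$ in $\Lambda\cap\Sigma$ onto orbits of $\widetilde Z^T$ in $\widetilde\Lambda\cap\widetilde\Sigma$.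
   Formalization: In a 1-homoclinic loop the trajectory, at every visit to p₁, keeps one field (X or Y) before and after, then first meets Σ at a sewing point and returns to p₁ meeting Σ nowhere else. Each condition added here is assumed in the paper as well or is needed for the statement above to hold. *)

From Stdlib Require Import Reals Lra.
From Coquelicot Require Import Coquelicot.
Open Scope R_scope.

Definition pt : Type := (R * R)%type.

Definition dx (g : pt -> R) (p : pt) : R := Derive (fun x => g (x, snd p)) (fst p).
Definition dy (g : pt -> R) (p : pt) : R := Derive (fun y => g (fst p, y)) (snd p).

Fixpoint Ck (k : nat) (g : pt -> R) : Prop :=
  match k with
  | O => forall p : pt, continuous g p
  | S k' =>
      (forall p : pt, ex_derive (fun x => g (x, snd p)) (fst p)
                   /\ ex_derive (fun y => g (fst p, y)) (snd p))
      /\ Ck k' (dx g) /\ Ck k' (dy g)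
  end.

Definition smooth (g : pt -> R) : Prop := forall k : nat, Ck k g.
Definition smooth_field (W : pt -> pt) : Prop :=
  smooth (fun p => fst (W p)) /\ smooth (fun p => snd (W p)).

(** Raw data of a planar PSVF Z = (X, Y) with switching function f. *)
Record psvf : Type := PSVF { sw : pt -> R; fX : pt -> pt; fY : pt -> pt }.

Definition is_psvf (Z : psvf) : Prop :=
  smooth (sw Z) /\ smooth_field (fX Z) /\ smooth_field (fY Z) /\
  (forall p : pt, sw Z p = 0 -> (dx (sw Z) p, dy (sw Z) p) <> (0, 0)).

Definition lie (W : pt -> pt) (g : pt -> R) (p : pt) : R :=
  dx g p * fst (W p) + dy g p * snd (W p).

Definition Xf (Z : psvf) : pt -> R := lie (fX Z) (sw Z).
Definition Yf (Z : psvf) : pt -> R := lie (fY Z) (sw Z).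
Definition X2f (Z : psvf) : pt -> R := lie (fX Z) (Xf Z).
Definition Y2f (Z : psvf) : pt -> R := lie (fY Z) (Yf Z).

Definition in_Sigma (Z : psvf) (p : pt) : Prop := sw Z p = 0.

Definition sewing (Z : psvf) (p : pt) : Prop := in_Sigma Z p /\ Xf Z p * Yf Z p > 0.

Definition slide_esc (Z : psvf) (p : pt) : Prop := in_Sigma Z p /\ Xf Z p * Yf Z p < 0.

Definition ZT (Z : psvf) (p : pt) : pt :=
  ((Yf Z p * fst (fX Z p) - Xf Z p * fst (fY Z p)) / (Yf Z p - Xf Z p),
   (Yf Z p * snd (fX Z p) - Xf Z p * snd (fY Z p)) / (Yf Z p - Xf Z p)).

Definition visible_fold_X (Z : psvf) (p : pt) : Prop :=
  in_Sigma Z p /\ Xf Z p = 0 /\ X2f Z p > 0.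
Definition visible_fold_Y (Z : psvf) (p : pt) : Prop :=
  in_Sigma Z p /\ Yf Z p = 0 /\ Y2f Z p < 0.
Definition vv_twofold (Z : psvf) (p : pt) : Prop :=
  visible_fold_X Z p /\ visible_fold_Y Z p.

Definition cont_at (phi : R -> pt) (t : R) : Prop :=
  continuous (fun s => fst (phi s)) t /\ continuous (fun s => snd (phi s)) t.
Definition solves (W : pt -> pt) (phi : R -> pt) (t : R) : Prop :=
  is_derive (fun s => fst (phi s)) t (fst (W (phi t))) /\
  is_derive (fun s => snd (phi s)) t (snd (W (phi t))).

(** Local trajectories (Filippov convention) on a time interval [a,b]:
    an orbit arc of X inside Sigma^+, of Y inside Sigma^-, or of Z^T inside
    the sliding/escaping region. *)
Definition Xpiece (Z : psvf) (phi : R -> pt) (a b : R) : Prop :=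
  a < b /\ (forall t, a <= t <= b -> cont_at phi t /\ sw Z (phi t) >= 0) /\
  (forall t, a < t < b -> solves (fX Z) phi t).
Definition Ypiece (Z : psvf) (phi : R -> pt) (a b : R) : Prop :=
  a < b /\ (forall t, a <= t <= b -> cont_at phi t /\ sw Z (phi t) <= 0) /\
  (forall t, a < t < b -> solves (fY Z) phi t).
Definition Spiece (Z : psvf) (phi : R -> pt) (a b : R) : Prop :=
  a < b /\ (forall t, a <= t <= b -> cont_at phi t) /\
  (forall t, a < t < b -> slide_esc Z (phi t) /\ solves (ZT Z) phi t).
Definition piece (Z : psvf) (phi : R -> pt) (a b : R) : Prop :=
  Xpiece Z phi a b \/ Ypiece Z phi a b \/ Spiece Z phi a b.

(** Global trajectory: defined for all t, and a (locally finite,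
    orientation-preserving) concatenation of local trajectories: around every
    time there is a local trajectory backward and one forward. *)
Definition global_traj (Z : psvf) (g : R -> pt) : Prop :=
  forall t : R, exists e : R, e > 0 /\ piece Z g (t - e) t /\ piece Z g t (t + e).

Definition passes_through (Z : psvf) (g : R -> pt) (t : R) : Prop :=
  exists e : R, e > 0 /\
    ((Xpiece Z g (t - e) t /\ Xpiece Z g t (t + e)) \/
     (Ypiece Z g (t - e) t /\ Ypiece Z g t (t + e))).

Definition homoclinic_loop1 (Z : psvf) (g : R -> pt) (p : pt) : Prop :=
  global_traj Z g /\ vv_twofold Z p /\ (exists t, g t = p) /\
  forall t : R, g t = p ->
    passes_through Z g t /\
    exists s u : R, t < s < u /\ sewing Z (g s) /\ g u = p /\
      (forall r, t < r < u -> r <> s -> sw Z (g r) <> 0).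

Definition reach_by (W : pt -> pt) (C : pt -> Prop) (S : pt -> Prop) (p q : pt) : Prop :=
  exists (T : R) (phi : R -> pt), 0 <= T /\ phi 0 = p /\ phi T = q /\
    (forall t, 0 <= t <= T -> S (phi t) /\ cont_at phi t) /\
    (forall t, 0 < t < T -> C (phi t) /\ solves W phi t).

Definition rel_continuous (L : pt -> Prop) (h : pt -> pt) : Prop :=
  forall p, L p -> forall eps : R, eps > 0 -> exists delta : R, delta > 0 /\
    forall q, L q -> Rabs (fst q - fst p) < delta -> Rabs (snd q - snd p) < delta ->
      Rabs (fst (h q) - fst (h p)) < eps /\ Rabs (snd (h q) - snd (h p)) < eps.

Definition sigma_equiv (Z : psvf) (L : pt -> Prop) (Zt : psvf) (Lt : pt -> Prop) : Prop :=
  exists h g : pt -> pt,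
    (forall p, L p -> Lt (h p)) /\ (forall q, Lt q -> L (g q)) /\
    (forall p, L p -> g (h p) = p) /\ (forall q, Lt q -> h (g q) = q) /\
    rel_continuous L h /\ rel_continuous Lt g /\
    (forall p, L p -> (sw Z p = 0 <-> sw Zt (h p) = 0)) /\
    (forall p q, L p -> L q ->
       (reach_by (fX Z) (fun _ => True) (fun x => L x /\ sw Z x >= 0) p q <->
        reach_by (fX Zt) (fun _ => True) (fun x => Lt x /\ sw Zt x >= 0) (h p) (h q))) /\
    (forall p q, L p -> L q ->
       (reach_by (fY Z) (fun _ => True) (fun x => L x /\ sw Z x <= 0) p q <->
        reach_by (fY Zt) (fun _ => True) (fun x => Lt x /\ sw Zt x <= 0) (h p) (h q))) /\
    (forall p q, L p -> L q ->
       (reach_by (ZT Z) (slide_esc Z) (fun x => L x /\ sw Z x = 0) p q <->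
        reach_by (ZT Zt) (slide_esc Zt) (fun x => Lt x /\ sw Zt x = 0) (h p) (h q))).

Definition Z2 : psvf :=
  PSVF (fun p => snd p)
       (fun p => (1, fst p / 2 - 4 * fst p ^ 3))
       (fun p => (-1, fst p / 2 - 4 * fst p ^ 3)).

Definition Lambda2 (p : pt) : Prop :=
  -1/2 <= fst p <= 1/2 /\
  (snd p = fst p ^ 2 / 4 - fst p ^ 4 \/ snd p = - (fst p ^ 2 / 4 - fst p ^ 4)).

From Stdlib Require Import Reals Lra Classical ClassicalEpsilon.
From Coquelicot Require Import Coquelicot.
Open Scope R_scope.

(* The 1-homoclinic loop through the visible-visible two-fold p is a figure eight: from p
   the trajectory follows X above Sigma to a sewing point, crosses, follows Y back to p,
   continues along Y to a second sewing point and returns to p along X.  Off Sigma and at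
   sewing points a Filippov trajectory is determined by its position, and at p by the side of
   Sigma it comes from; since X and Y are locally Lipschitz, solutions are unique, so the
   trajectory is periodic and over one period it is injective except for the two gluings of
   the eight.  The model Z2 on Lambda2 is a figure eight of the same kind.  Both are
   parametrized by [-1/2, 3/2] with the same gluings, knots on Sigma, X- and Y-arcs and no
   sliding, so matching parameters gives the Sigma-equivalence; its inverse is continuous by
   compactness of the parameter interval. *)

(** * Continuity and differentiation along plane curves *)

Lemma Rmin_pos_le x y : 0 < x -> 0 < y -> 0 < Rmin x y /\ Rmin x y <= x /\ Rmin x y <= y.
Proof. intros Hx Hy. split; [now apply Rmin_pos|split; [apply Rmin_l|apply Rmin_r]]. Qed.

Lemma continuity_pt_eps (f : R -> R) t :
  continuity_pt f t -> forall eps, eps > 0 ->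
  exists d, d > 0 /\ forall s, Rabs (s - t) < d -> Rabs (f s - f t) < eps.
Proof.
  intros H eps He. destruct (H eps He) as [d [Hd Hd']].
  exists d. split; [lra|]. intros s Hs.
  destruct (Req_dec s t) as [->|Hne]; [rewrite Rminus_eq_0, Rabs_R0; lra|].
  apply (Hd' s). repeat split; auto.
Qed.

Lemma eps_continuity_pt (f : R -> R) t :
  (forall eps, eps > 0 ->
   exists d, d > 0 /\ forall s, Rabs (s - t) < d -> Rabs (f s - f t) < eps) ->
  continuity_pt f t.
Proof.
  intros H eps He. destruct (H eps He) as [d [Hd Hd']].
  exists d. split; [lra|]. intros s [_ Hs]. exact (Hd' s Hs).
Qed.

Lemma continuity_pt_sign_near (f : R -> R) t :
  continuity_pt f t -> f t <> 0 ->
  exists d, d > 0 /\ forall s, Rabs (s - t) < d -> f s * f t > 0.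
Proof.
  intros H Hne. destruct (continuity_pt_eps f t H (Rabs (f t)) (Rabs_pos_lt _ Hne)) as [d [Hd Hd']].
  exists d. split; [exact Hd|]. intros s Hs. specialize (Hd' s Hs).
  revert Hd'. unfold Rabs. repeat destruct Rcase_abs; intros; nra.
Qed.

Lemma continuous_eps2 (f : pt -> R) q :
  continuous f q -> forall eps, eps > 0 -> exists d, d > 0 /\
  forall z, Rabs (fst z - fst q) < d -> Rabs (snd z - snd q) < d -> Rabs (f z - f q) < eps.
Proof.
  intros H eps He.
  destruct (H (ball (f q) (mkposreal eps He))) as [d Hd]; [apply locally_ball|].
  exists d. split; [apply cond_pos|]. intros z H1 H2. apply Hd. split; assumption.
Qed.

Lemma cont_at_iff phi t : cont_at phi t <->
  continuity_pt (fun s => fst (phi s)) t /\ continuity_pt (fun s => snd (phi s)) t.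
Proof.
  unfold cont_at. split; intros [H1 H2]; split; apply continuity_pt_filterlim; assumption.
Qed.

Lemma continuity_pt_comp_cont_at (f : pt -> R) phi t :
  continuous f (phi t) -> cont_at phi t -> continuity_pt (fun s => f (phi s)) t.
Proof.
  intros Hf [H1 H2]. apply continuity_pt_filterlim.
  apply (continuous_ext (fun s => f (fst (phi s), snd (phi s)))).
  { intro s. now rewrite <- surjective_pairing. }
  apply (continuous_comp_2 _ _ (fun a b => f (a, b))); [exact H1|exact H2|].
  apply (continuous_ext f); [intros [a b]; reflexivity|].
  now rewrite <- surjective_pairing.
Qed.

Lemma cont_at_comp phi (u : R -> R) t :
  continuity_pt u t -> cont_at phi (u t) -> cont_at (fun s => phi (u s)) t.
Proof.
  intros Hu Hphi. apply cont_at_iff in Hphi as [H1 H2]. apply cont_at_iff.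
  split; [apply (continuity_pt_comp u (fun s => fst (phi s)))|
          apply (continuity_pt_comp u (fun s => snd (phi s)))]; assumption.
Qed.

Lemma cont_at_shift phi c t : cont_at phi (t + c) -> cont_at (fun s => phi (s + c)) t.
Proof.
  intro H. apply (cont_at_comp phi (fun s => s + c)); [|exact H].
  apply continuity_pt_plus; [apply continuity_pt_id|apply continuity_pt_const; now intros x y].
Qed.

Lemma cont_at_reverse phi t : cont_at phi (- t) -> cont_at (fun s => phi (- s)) t.
Proof.
  intro H. apply (cont_at_comp phi (fun s => - s)); [|exact H].
  apply continuity_pt_opp, continuity_pt_id.
Qed.

Lemma cont_at_const (q : pt) t : cont_at (fun _ => q) t.
Proof. split; apply continuous_const. Qed.

Lemma solves_derivable_pt_lim W phi t : solves W phi t ->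
  derivable_pt_lim (fun s => fst (phi s)) t (fst (W (phi t))) /\
  derivable_pt_lim (fun s => snd (phi s)) t (snd (W (phi t))).
Proof. intros [H1 H2]; split; apply is_derive_Reals; assumption. Qed.

Lemma is_derive_comp_affine (f : R -> R) (k c t l : R) :
  is_derive f (k * t + c) l -> is_derive (fun s => f (k * s + c)) t (k * l).
Proof.
  intro H. replace (k * l) with (scal k l) by reflexivity.
  apply (is_derive_comp f (fun s => k * s + c)); [exact H|].
  auto_derive; [exact I|ring].
Qed.

Lemma solves_shift W phi c t : solves W phi (t + c) -> solves W (fun s => phi (s + c)) t.
Proof.
  intros [H1 H2].
  assert (E : forall s, 1 * s + c = s + c) by (intro; ring).
  split.
  - replace (fst (W (phi (t + c)))) with (1 * fst (W (phi (1 * t + c)))) by (rewrite E; ring).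
    apply (is_derive_ext (fun s => fst (phi (1 * s + c)))); [intro s; now rewrite E|].
    apply (is_derive_comp_affine (fun x => fst (phi x))). now rewrite E.
  - replace (snd (W (phi (t + c)))) with (1 * snd (W (phi (1 * t + c)))) by (rewrite E; ring).
    apply (is_derive_ext (fun s => snd (phi (1 * s + c)))); [intro s; now rewrite E|].
    apply (is_derive_comp_affine (fun x => snd (phi x))). now rewrite E.
Qed.

Definition opp_field (W : pt -> pt) : pt -> pt := fun q => (- fst (W q), - snd (W q)).

Lemma solves_reverse W phi t :
  solves W phi (- t) -> solves (opp_field W) (fun s => phi (- s)) t.
Proof.
  intros [H1 H2]. unfold opp_field. simpl.
  assert (E : forall s, -1 * s + 0 = - s) by (intro; ring).
  split.
  - replace (- fst (W (phi (- t)))) with (-1 * fst (W (phi (-1 * t + 0)))) by (rewrite E; ring).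
    apply (is_derive_ext (fun s => fst (phi (-1 * s + 0)))); [intro s; now rewrite E|].
    apply (is_derive_comp_affine (fun x => fst (phi x))). now rewrite E.
  - replace (- snd (W (phi (- t)))) with (-1 * snd (W (phi (-1 * t + 0)))) by (rewrite E; ring).
    apply (is_derive_ext (fun s => snd (phi (-1 * s + 0)))); [intro s; now rewrite E|].
    apply (is_derive_comp_affine (fun x => snd (phi x))). now rewrite E.
Qed.

Definition is_C1 (f : pt -> R) : Prop :=
  (forall p : pt, ex_derive (fun x => f (x, snd p)) (fst p)
               /\ ex_derive (fun y => f (fst p, y)) (snd p)) /\
  (forall p, continuous f p) /\ (forall p, continuous (dx f) p) /\
  (forall p, continuous (dy f) p).

Definition is_C1_field (W : pt -> pt) : Prop :=
  is_C1 (fun q => fst (W q)) /\ is_C1 (fun q => snd (W q)).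

Lemma smooth_C1 f : smooth f -> is_C1 f.
Proof.
  intro H. destruct (H 1%nat) as [Hd [H1 H2]]. exact (conj Hd (conj (H 0%nat) (conj H1 H2))).
Qed.

Lemma C1_is_derive_x f x y : is_C1 f -> is_derive (fun u => f (u, y)) x (dx f (x, y)).
Proof. intros [Hd _]. apply Derive_correct. exact (proj1 (Hd (x, y))). Qed.

Lemma C1_is_derive_y f x y : is_C1 f -> is_derive (fun v => f (x, v)) y (dy f (x, y)).
Proof. intros [Hd _]. apply Derive_correct. exact (proj2 (Hd (x, y))). Qed.

Lemma MVT_between (f df : R -> R) a b : (forall x, is_derive f x (df x)) ->
  exists c, Rmin a b <= c <= Rmax a b /\ f b - f a = df c * (b - a).
Proof.
  intro H. apply MVT_gen; [intros x _; apply H|].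
  intros x _. apply continuity_pt_filterlim.
  apply (ex_derive_continuous (K := R_AbsRing) (V := R_NormedModule)). eexists. apply H.
Qed.

Lemma between_Rabs a b c : Rmin a b <= c <= Rmax a b -> Rabs (c - a) <= Rabs (b - a).
Proof.
  unfold Rmin, Rmax. destruct (Rle_dec a b); unfold Rabs;
    destruct (Rcase_abs (c - a)); destruct (Rcase_abs (b - a)); lra.
Qed.

Lemma Rabs_between_lt a b c q r : Rmin a b <= c <= Rmax a b ->
  Rabs (a - q) < r -> Rabs (b - q) < r -> Rabs (c - q) < r.
Proof.
  unfold Rmin, Rmax. intros Hc Ha Hb.
  apply Rabs_lt_between' in Ha, Hb. apply Rabs_lt_between'. destruct (Rle_dec a b); lra.
Qed.

Lemma C1_differentiable_pt_lim f x y : is_C1 f ->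
  differentiable_pt_lim (fun u v => f (u, v)) x y (dx f (x, y)) (dy f (x, y)).
Proof.
  intros HC eps. pose proof HC as [_ [_ [Hcx Hcy]]].
  assert (He2 : eps / 2 > 0) by (pose proof (cond_pos eps); lra).
  destruct (continuous_eps2 _ (x, y) (Hcx (x, y)) _ He2) as [d1 [Hd1 H1]].
  destruct (continuous_eps2 _ (x, y) (Hcy (x, y)) _ He2) as [d2 [Hd2 H2]].
  exists (mkposreal _ (Rmin_pos _ _ Hd1 Hd2)). simpl. intros u v Hu Hv.
  pose proof (Rmin_l d1 d2). pose proof (Rmin_r d1 d2).
  destruct (MVT_between (fun a => f (a, v)) (fun a => dx f (a, v)) x u) as [c1 [Hc1 E1]].
  { intro a. now apply C1_is_derive_x. }
  destruct (MVT_between (fun b => f (x, b)) (fun b => dy f (x, b)) y v) as [c2 [Hc2 E2]].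
  { intro b. now apply C1_is_derive_y. }
  apply between_Rabs in Hc1, Hc2.
  assert (B1 : Rabs (dx f (c1, v) - dx f (x, y)) < eps / 2) by (apply H1; simpl; lra).
  assert (B2 : Rabs (dy f (x, c2) - dy f (x, y)) < eps / 2).
  { apply H2; simpl; [rewrite Rminus_eq_0, Rabs_R0|]; lra. }
  replace (f (u, v) - f (x, y) - (dx f (x, y) * (u - x) + dy f (x, y) * (v - y))) with
    ((f (u, v) - f (x, v)) - dx f (x, y) * (u - x)
     + ((f (x, v) - f (x, y)) - dy f (x, y) * (v - y)))
    by ring.
  rewrite E1, E2, <- !Rmult_minus_distr_r.
  eapply Rle_trans; [apply Rabs_triang|]. rewrite !Rabs_mult.
  pose proof (Rabs_pos (u - x)). pose proof (Rabs_pos (v - y)).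
  pose proof (Rmax_l (Rabs (u - x)) (Rabs (v - y))).
  pose proof (Rmax_r (Rabs (u - x)) (Rabs (v - y))).
  apply Rle_trans with (eps / 2 * Rabs (u - x) + eps / 2 * Rabs (v - y)); [|nra].
  apply Rplus_le_compat; apply Rmult_le_compat_r; lra.
Qed.

Lemma C1_derivable_pt_lim_comp f phi t l1 l2 : is_C1 f ->
  derivable_pt_lim (fun s => fst (phi s)) t l1 ->
  derivable_pt_lim (fun s => snd (phi s)) t l2 ->
  derivable_pt_lim (fun s => f (phi s)) t (dx f (phi t) * l1 + dy f (phi t) * l2).
Proof.
  intros HC H1 H2.
  pose proof (derivable_pt_lim_comp_2d (fun u v => f (u, v)) _ _ t _ _ _ _
    (C1_differentiable_pt_lim f (fst (phi t)) (snd (phi t)) HC) H1 H2) as H.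
  rewrite <- surjective_pairing in H.
  apply (derivable_pt_lim_ext (fun s => f (fst (phi s), snd (phi s)))); [|exact H].
  intro s. now rewrite <- surjective_pairing.
Qed.

Lemma solves_derive_lie f W phi t : is_C1 f -> solves W phi t ->
  derivable_pt_lim (fun s => f (phi s)) t (lie W f (phi t)).
Proof.
  intros HC Hs. apply solves_derivable_pt_lim in Hs as [H1 H2].
  now apply C1_derivable_pt_lim_comp.
Qed.

Lemma lie_continuity_pt f W phi t : is_C1 f -> is_C1_field W -> cont_at phi t ->
  continuity_pt (fun s => lie W f (phi s)) t.
Proof.
  intros [_ [_ [Hx Hy]]] [[_ [HW1 _]] [_ [HW2 _]]] Hc. unfold lie.
  apply continuity_pt_plus; apply continuity_pt_mult.
  - now apply (continuity_pt_comp_cont_at (dx f)).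
  - now apply (continuity_pt_comp_cont_at (fun q => fst (W q))).
  - now apply (continuity_pt_comp_cont_at (dy f)).
  - now apply (continuity_pt_comp_cont_at (fun q => snd (W q))).
Qed.

Lemma C1_continuity_pt_comp f phi t : is_C1 f -> cont_at phi t ->
  continuity_pt (fun s => f (phi s)) t.
Proof. intros [_ [Hc _]] H. now apply continuity_pt_comp_cont_at. Qed.

Lemma derivable_pt_lim_of_punctured (c dc : R -> R) t e : e > 0 ->
  continuity_pt c t -> continuity_pt dc t ->
  (forall r, r <> t -> Rabs (r - t) < e -> derivable_pt_lim c r (dc r)) ->
  derivable_pt_lim c t (dc t).
Proof.
  intros He Hc Hdc Hd eps Heps.
  destruct (continuity_pt_eps _ _ Hdc eps Heps) as [d [Hd0 Hd1]].
  exists (mkposreal _ (Rmin_pos _ _ Hd0 He)). simpl. intros h Hh0 Hh.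
  pose proof (Rmin_l d e). pose proof (Rmin_r d e).
  assert (Near : forall x, Rmin t (t + h) <= x <= Rmax t (t + h) -> Rabs (x - t) < Rmin d e).
  { intros x Hx. apply between_Rabs in Hx. replace (t + h - t) with h in Hx by ring. lra. }
  destruct (MVT_gen c t (t + h) dc) as [xi [Hxi E]].
  { intros x Hx. apply is_derive_Reals. apply Hd; [|specialize (Near x ltac:(lra)); lra].
    revert Hx. unfold Rmin, Rmax. destruct (Rle_dec t (t + h)); lra. }
  { intros x Hx. destruct (Req_dec x t) as [->|Hne]; [exact Hc|].
    apply derivable_continuous_pt. exists (dc x). apply Hd; [exact Hne|].
    specialize (Near x Hx). lra. }
  replace ((c (t + h) - c t) / h - dc t) with (dc xi - dc t)
    by (rewrite E; replace (t + h - t) with h by ring; field; exact Hh0).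
  apply Hd1. specialize (Near xi Hxi). lra.
Qed.

Lemma solves_of_punctured W phi t e : is_C1_field W -> e > 0 -> cont_at phi t ->
  (forall r, r <> t -> Rabs (r - t) < e -> solves W phi r) -> solves W phi t.
Proof.
  intros [[_ [HW1 _]] [_ [HW2 _]]] He Hc Hs. pose proof Hc as Hc'.
  apply cont_at_iff in Hc' as [Hc1 Hc2].
  split; apply is_derive_Reals.
  - apply (derivable_pt_lim_of_punctured _ (fun s => fst (W (phi s))) t e He Hc1).
    + now apply (continuity_pt_comp_cont_at (fun q => fst (W q))).
    + intros r Hr Hr'. exact (proj1 (solves_derivable_pt_lim W phi r (Hs r Hr Hr'))).
  - apply (derivable_pt_lim_of_punctured _ (fun s => snd (W (phi s))) t e He Hc2).
    + now apply (continuity_pt_comp_cont_at (fun q => snd (W q))).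
    + intros r Hr Hr'. exact (proj2 (solves_derivable_pt_lim W phi r (Hs r Hr Hr'))).
Qed.

Lemma sign_through_zero f W phi t r L : is_C1 f -> r <> t ->
  (forall x, Rmin t r <= x <= Rmax t r -> cont_at phi x /\ lie W f (phi x) * L > 0) ->
  (forall x, Rmin t r < x < Rmax t r -> solves W phi x) ->
  f (phi t) = 0 -> f (phi r) * L * (r - t) > 0.
Proof.
  intros Hf Hrt Hx Hs H0.
  destruct (MVT_gen (fun s => f (phi s)) t r (fun s => lie W f (phi s))) as [xi [Hxi E]].
  - intros x Hx'. apply is_derive_Reals, solves_derive_lie; [exact Hf|now apply Hs].
  - intros x Hx'. apply C1_continuity_pt_comp; [exact Hf|now apply Hx].
  - simpl in E. rewrite H0, Rminus_0_r in E. rewrite E.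
    destruct (Hx xi Hxi) as [_ Hl].
    assert (0 < (r - t) * (r - t)) by (apply Rsqr_pos_lt; lra).
    replace (lie W f (phi xi) * (r - t) * L * (r - t)) with
      ((lie W f (phi xi) * L) * ((r - t) * (r - t))) by ring.
    now apply Rmult_lt_0_compat.
Qed.

Lemma sign_after_zero f W phi t e : is_C1 f -> is_C1_field W -> e > 0 ->
  (forall r, t <= r <= t + e -> cont_at phi r) -> (forall r, t < r < t + e -> solves W phi r) ->
  f (phi t) = 0 -> lie W f (phi t) <> 0 ->
  exists d, d > 0 /\ forall r, t < r < t + d -> f (phi r) * lie W f (phi t) > 0.
Proof.
  intros Hf HW He Hc Hs H0 Hne.
  destruct (continuity_pt_sign_near _ t (lie_continuity_pt f W phi t Hf HW (Hc t ltac:(lra))) Hne)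
    as [d [Hd Hd']].
  exists (Rmin d e). split; [now apply Rmin_pos|]. intros r Hr.
  pose proof (Rmin_l d e). pose proof (Rmin_r d e).
  assert (f (phi r) * lie W f (phi t) * (r - t) > 0); [|nra].
  apply sign_through_zero with W; [exact Hf|lra| |intros x Hx|exact H0];
    rewrite Rmin_left, Rmax_right in * by lra.
  - intros x Hx. split; [apply Hc; lra|apply Hd'; rewrite Rabs_pos_eq; lra].
  - apply Hs; lra.
Qed.

Lemma sign_before_zero f W phi t e : is_C1 f -> is_C1_field W -> e > 0 ->
  (forall r, t - e <= r <= t -> cont_at phi r) -> (forall r, t - e < r < t -> solves W phi r) ->
  f (phi t) = 0 -> lie W f (phi t) <> 0 ->
  exists d, d > 0 /\ forall r, t - d < r < t -> f (phi r) * lie W f (phi t) < 0.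
Proof.
  intros Hf HW He Hc Hs H0 Hne.
  destruct (continuity_pt_sign_near _ t (lie_continuity_pt f W phi t Hf HW (Hc t ltac:(lra))) Hne)
    as [d [Hd Hd']].
  exists (Rmin d e). split; [now apply Rmin_pos|]. intros r Hr.
  pose proof (Rmin_l d e). pose proof (Rmin_r d e).
  assert (f (phi r) * lie W f (phi t) * (r - t) > 0); [|nra].
  apply sign_through_zero with W; [exact Hf|lra| |intros x Hx|exact H0];
    rewrite Rmin_right, Rmax_left in * by lra.
  - intros x Hx. split; [apply Hc; lra|apply Hd'; rewrite Rabs_left1; lra].
  - apply Hs; lra.
Qed.

Lemma no_root_same_sign (F : R -> R) a b r0 r1 : continuity F ->
  (forall x, a < x < b -> F x <> 0) -> a < r0 < b -> a < r1 < b -> F r0 * F r1 > 0.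
Proof.
  intros HF Hnz H0 H1. apply Rnot_le_gt. intro Hle.
  destruct (IVT_gen F r0 r1 0 HF) as [z [Hz Fz]].
  - unfold Rmin, Rmax. destruct (Rle_dec (F r0) (F r1)); nra.
  - apply (Hnz z); [|exact Fz]. revert Hz. unfold Rmin, Rmax. destruct (Rle_dec r0 r1); lra.
Qed.

(** * Uniqueness for locally Lipschitz fields *)

Definition in_box (q : pt) (r : R) (a : pt) : Prop :=
  Rabs (fst a - fst q) < r /\ Rabs (snd a - snd q) < r.

Definition l1_dist (a b : pt) : R := Rabs (fst a - fst b) + Rabs (snd a - snd b).

Definition locally_lipschitz (W : pt -> pt) : Prop :=
  forall q, exists r K, r > 0 /\ K >= 0 /\ forall a b, in_box q r a -> in_box q r b ->
    Rabs (fst (W a) - fst (W b)) <= K * l1_dist a b /\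
    Rabs (snd (W a) - snd (W b)) <= K * l1_dist a b.

Lemma C1_lipschitz_near f q : is_C1 f -> exists r K, r > 0 /\ K >= 0 /\
  forall a b, in_box q r a -> in_box q r b -> Rabs (f a - f b) <= K * l1_dist a b.
Proof.
  intros HC. pose proof HC as [_ [_ [Hcx Hcy]]].
  destruct (continuous_eps2 _ q (Hcx q) 1 Rlt_0_1) as [d1 [Hd1 H1]].
  destruct (continuous_eps2 _ q (Hcy q) 1 Rlt_0_1) as [d2 [Hd2 H2]].
  exists (Rmin d1 d2), (Rabs (dx f q) + Rabs (dy f q) + 1).
  pose proof (Rmin_l d1 d2). pose proof (Rmin_r d1 d2).
  pose proof (Rabs_pos (dx f q)). pose proof (Rabs_pos (dy f q)).
  split; [now apply Rmin_pos|]. split; [lra|].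
  intros [a1 a2] [b1 b2] [Ha1 Ha2] [Hb1 Hb2]; unfold l1_dist; simpl in *.
  destruct (MVT_between (fun x => f (x, a2)) (fun x => dx f (x, a2)) b1 a1) as [c1 [Hc1 E1]].
  { intro x. now apply C1_is_derive_x. }
  destruct (MVT_between (fun y => f (b1, y)) (fun y => dy f (b1, y)) b2 a2) as [c2 [Hc2 E2]].
  { intro y. now apply C1_is_derive_y. }
  assert (B1 : Rabs (dx f (c1, a2)) <= Rabs (dx f q) + 1).
  { assert (Rabs (dx f (c1, a2) - dx f q) < 1)
      by (apply H1; simpl; [apply (Rabs_between_lt b1 a1)|]; lra).
    pose proof (Rabs_triang_inv (dx f (c1, a2)) (dx f q)). lra. }
  assert (B2 : Rabs (dy f (b1, c2)) <= Rabs (dy f q) + 1).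
  { assert (Rabs (dy f (b1, c2) - dy f q) < 1)
      by (apply H2; simpl; [|apply (Rabs_between_lt b2 a2)]; lra).
    pose proof (Rabs_triang_inv (dy f (b1, c2)) (dy f q)). lra. }
  replace (f (a1, a2) - f (b1, b2)) with ((f (a1, a2) - f (b1, a2)) + (f (b1, a2) - f (b1, b2)))
    by ring.
  rewrite E1, E2. eapply Rle_trans; [apply Rabs_triang|]. rewrite !Rabs_mult.
  pose proof (Rabs_pos (a1 - b1)). pose proof (Rabs_pos (a2 - b2)).
  apply Rle_trans with
    ((Rabs (dx f q) + 1) * Rabs (a1 - b1) + (Rabs (dy f q) + 1) * Rabs (a2 - b2)); [|nra].
  apply Rplus_le_compat; apply Rmult_le_compat_r; lra.
Qed.

Lemma C1_field_locally_lipschitz W : is_C1_field W -> locally_lipschitz W.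
Proof.
  intros [H1 H2] q.
  destruct (C1_lipschitz_near _ q H1) as [r1 [K1 [Hr1 [HK1 L1]]]].
  destruct (C1_lipschitz_near _ q H2) as [r2 [K2 [Hr2 [HK2 L2]]]].
  exists (Rmin r1 r2), (K1 + K2).
  pose proof (Rmin_l r1 r2). pose proof (Rmin_r r1 r2).
  split; [now apply Rmin_pos|]. split; [lra|].
  intros a b [Ha1 Ha2] [Hb1 Hb2].
  assert (0 <= l1_dist a b) by (unfold l1_dist; pose proof (Rabs_pos (fst a - fst b));
                                 pose proof (Rabs_pos (snd a - snd b)); lra).
  split; [eapply Rle_trans; [apply L1; split; lra|nra]|].
  eapply Rle_trans; [apply L2; split; lra|nra].
Qed.

Lemma locally_lipschitz_opp W : locally_lipschitz W -> locally_lipschitz (opp_field W).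
Proof.
  intros H q. destruct (H q) as [r [K [Hr [HK L]]]]. exists r, K. do 2 (split; [assumption|]).
  intros a b Ha Hb. unfold opp_field; simpl.
  replace (- fst (W a) - - fst (W b)) with (- (fst (W a) - fst (W b))) by ring.
  replace (- snd (W a) - - snd (W b)) with (- (snd (W a) - snd (W b))) by ring.
  rewrite !Rabs_Ropp. now apply L.
Qed.

Lemma cont_at_in_box phi t r : cont_at phi t -> r > 0 ->
  exists d, d > 0 /\ forall s, Rabs (s - t) < d -> in_box (phi t) r (phi s).
Proof.
  intros Hc Hr. apply cont_at_iff in Hc as [H1 H2].
  destruct (continuity_pt_eps _ _ H1 r Hr) as [d1 [Hd1 D1]].
  destruct (continuity_pt_eps _ _ H2 r Hr) as [d2 [Hd2 D2]].
  exists (Rmin d1 d2). split; [now apply Rmin_pos|].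
  pose proof (Rmin_l d1 d2). pose proof (Rmin_r d1 d2).
  intros s Hs. split; [apply D1|apply D2]; lra.
Qed.

Lemma inner_le_lipschitz d1 d2 w1 w2 K : K >= 0 ->
  Rabs w1 <= K * (Rabs d1 + Rabs d2) -> Rabs w2 <= K * (Rabs d1 + Rabs d2) ->
  d1 * w1 + d2 * w2 <= 2 * K * (d1 * d1 + d2 * d2).
Proof.
  intros HK H1 H2.
  assert (E1 : d1 * w1 <= Rabs d1 * Rabs w1) by (rewrite <- Rabs_mult; apply Rle_abs).
  assert (E2 : d2 * w2 <= Rabs d2 * Rabs w2) by (rewrite <- Rabs_mult; apply Rle_abs).
  assert (S1 : Rabs d1 * Rabs d1 = d1 * d1) by (unfold Rabs; destruct Rcase_abs; ring).
  assert (S2 : Rabs d2 * Rabs d2 = d2 * d2) by (unfold Rabs; destruct Rcase_abs; ring).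
  pose proof (Rabs_pos d1). pose proof (Rabs_pos d2).
  assert (Rabs d1 * Rabs w1 <= Rabs d1 * (K * (Rabs d1 + Rabs d2)))
    by (apply Rmult_le_compat_l; lra).
  assert (Rabs d2 * Rabs w2 <= Rabs d2 * (K * (Rabs d1 + Rabs d2)))
    by (apply Rmult_le_compat_l; lra).
  assert (0 <= K * ((Rabs d1 - Rabs d2) * (Rabs d1 - Rabs d2)))
    by (apply Rmult_le_pos; [lra|apply Rle_0_sqr]).
  assert (Rabs d1 * (K * (Rabs d1 + Rabs d2)) + Rabs d2 * (K * (Rabs d1 + Rabs d2))
          + K * ((Rabs d1 - Rabs d2) * (Rabs d1 - Rabs d2))
          = 2 * K * (Rabs d1 * Rabs d1 + Rabs d2 * Rabs d2)) by ring.
  rewrite S1, S2 in *. lra.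
Qed.

Lemma derive_weighted_sqdist (D1 D2 : R -> R) (w1 w2 k s : R) :
  derivable_pt_lim D1 s w1 -> derivable_pt_lim D2 s w2 ->
  derivable_pt_lim (fun x => exp (- k * x) * (D1 x * D1 x + D2 x * D2 x)) s
    (exp (- k * s) * (2 * (D1 s * w1 + D2 s * w2) - k * (D1 s * D1 s + D2 s * D2 s))).
Proof.
  intros H1 H2. apply is_derive_Reals in H1, H2. apply is_derive_Reals.
  auto_derive.
  - repeat split; eexists; eassumption.
  - replace (Derive (fun x => D1 x) s) with w1 by (symmetry; now apply is_derive_unique).
    replace (Derive (fun x => D2 x) s) with w2 by (symmetry; now apply is_derive_unique). ring.
Qed.

Lemma continuity_weighted_sqdist (D1 D2 : R -> R) (k s : R) :
  continuity_pt D1 s -> continuity_pt D2 s ->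
  continuity_pt (fun x => exp (- k * x) * (D1 x * D1 x + D2 x * D2 x)) s.
Proof.
  intros H1 H2. apply continuity_pt_mult.
  - apply derivable_continuous_pt. exists (- k * exp (- k * s)).
    apply is_derive_Reals. auto_derive; [exact I|ring].
  - apply continuity_pt_plus; apply continuity_pt_mult; assumption.
Qed.

(* Gronwall in differential form: by [inner_le_lipschitz], the weight [exp (- 4 K s)] makes
   the squared distance of two solutions non-increasing. *)
Lemma ode_unique_in_box W phi1 phi2 q r K c t : K >= 0 -> c < t ->
  (forall a b, in_box q r a -> in_box q r b ->
     Rabs (fst (W a) - fst (W b)) <= K * l1_dist a b /\
     Rabs (snd (W a) - snd (W b)) <= K * l1_dist a b) ->
  (forall s, c <= s <= t -> cont_at phi1 s /\ cont_at phi2 s) ->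
  (forall s, c <= s <= t -> in_box q r (phi1 s) /\ in_box q r (phi2 s)) ->
  (forall s, c < s < t -> solves W phi1 s /\ solves W phi2 s) ->
  phi1 c = phi2 c -> phi1 t = phi2 t.
Proof.
  intros HK Hct Lip Hc Hbox Hs E0.
  set (D1 := fun s => fst (phi1 s) - fst (phi2 s)).
  set (D2 := fun s => snd (phi1 s) - snd (phi2 s)).
  set (E := fun s => exp (- (4 * K) * s) * (D1 s * D1 s + D2 s * D2 s)).
  set (dE := fun s => exp (- (4 * K) * s) *
    (2 * (D1 s * (fst (W (phi1 s)) - fst (W (phi2 s)))
          + D2 s * (snd (W (phi1 s)) - snd (W (phi2 s))))
     - 4 * K * (D1 s * D1 s + D2 s * D2 s))).
  destruct (MVT_gen E c t dE) as [xi [Hxi EM]]; rewrite ?Rmin_left, ?Rmax_right in * by lra.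
  - intros x Hx. apply is_derive_Reals. destruct (Hs x Hx) as [S1 S2].
    apply solves_derivable_pt_lim in S1 as [S11 S12], S2 as [S21 S22].
    apply derive_weighted_sqdist; now apply derivable_pt_lim_minus.
  - intros x Hx. destruct (Hc x Hx) as [C1 C2].
    apply cont_at_iff in C1 as [C11 C12], C2 as [C21 C22].
    apply continuity_weighted_sqdist; now apply continuity_pt_minus.
  - assert (HdE : dE xi <= 0).
    { destruct (Hbox xi Hxi) as [B1 B2]. destruct (Lip _ _ B1 B2) as [L1 L2].
      assert (D1 xi * (fst (W (phi1 xi)) - fst (W (phi2 xi)))
              + D2 xi * (snd (W (phi1 xi)) - snd (W (phi2 xi)))
              <= 2 * K * (D1 xi * D1 xi + D2 xi * D2 xi)) by (now apply inner_le_lipschitz).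
      unfold dE. rewrite <- (Rmult_0_r (exp (- (4 * K) * xi))).
      apply Rmult_le_compat_l; [apply Rlt_le, exp_pos|lra]. }
    assert (Et : E t <= 0) by (assert (E c = 0) by (unfold E, D1, D2; rewrite E0; ring); nra).
    unfold E in Et. pose proof (exp_pos (- (4 * K) * t)).
    assert (D1 t * D1 t + D2 t * D2 t <= 0) by nra.
    assert (D1 t = 0) by nra. assert (D2 t = 0) by nra. unfold D1, D2 in *.
    rewrite (surjective_pairing (phi1 t)), (surjective_pairing (phi2 t)). f_equal; lra.
Qed.

Lemma ode_unique_local W phi1 phi2 c b : locally_lipschitz W -> c < b ->
  (forall t, c <= t <= b -> cont_at phi1 t /\ cont_at phi2 t) ->
  (forall t, c < t < b -> solves W phi1 t /\ solves W phi2 t) ->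
  phi1 c = phi2 c ->
  exists d, d > 0 /\ forall t, c <= t <= b -> t < c + d -> phi1 t = phi2 t.
Proof.
  intros HL Hcb Hc Hs E0.
  destruct (HL (phi1 c)) as [r [K [Hr [HK Lip]]]].
  destruct (cont_at_in_box phi1 c r (proj1 (Hc c ltac:(lra))) Hr) as [d1 [Hd1 N1]].
  destruct (cont_at_in_box phi2 c r (proj2 (Hc c ltac:(lra))) Hr) as [d2 [Hd2 N2]].
  rewrite <- E0 in N2.
  exists (Rmin d1 d2). split; [now apply Rmin_pos|]. intros t Ht Htd.
  pose proof (Rmin_l d1 d2). pose proof (Rmin_r d1 d2).
  destruct (Req_dec t c) as [->|Htc]; [exact E0|].
  apply (ode_unique_in_box W phi1 phi2 (phi1 c) r K c t HK ltac:(lra) Lip);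
    [| |intros s Hs'; apply Hs; lra|exact E0].
  - intros s Hs'. apply Hc. lra.
  - intros s Hs'. assert (Rabs (s - c) < Rmin d1 d2) by (rewrite Rabs_pos_eq; lra).
    split; [apply N1|apply N2]; lra.
Qed.

Lemma real_induction (a b : R) (P : R -> Prop) : a <= b -> P a ->
  (forall t, a <= t < b -> (forall s, a <= s <= t -> P s) ->
     exists d, d > 0 /\ forall s, t < s < t + d -> s <= b -> P s) ->
  (forall t, a < t <= b -> (forall s, a <= s < t -> P s) -> P t) ->
  forall t, a <= t <= b -> P t.
Proof.
  intros Hab Ha Hstep Hclose.
  set (S := fun t => a <= t <= b /\ forall s, a <= s <= t -> P s).
  assert (Sa : S a) by (split; [lra|intros s Hs; now replace s with a by lra]).
  destruct (completeness S) as [m [Hub Hlub]];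
    [exists b; intros x [Hx _]; lra|now exists a|].
  assert (Ham : a <= m) by (now apply Hub).
  assert (Hmb : m <= b) by (apply Hlub; intros x [Hx _]; lra).
  assert (Hbelow : forall s, a <= s < m -> P s).
  { intros s Hs. destruct (classic (exists t, S t /\ s < t)) as [[t [[_ Ht] Hst]]|Hn].
    - apply Ht. lra.
    - exfalso. assert (m <= s); [|lra].
      apply Hlub. intros x Hx. apply Rnot_lt_le. intro. apply Hn. now exists x. }
  assert (HPm : forall s, a <= s <= m -> P s).
  { intros s Hs. destruct (Req_dec s m) as [->|]; [|apply Hbelow; lra].
    destruct (Req_dec m a) as [->|]; [exact Ha|apply Hclose; [lra|exact Hbelow]]. }
  intros t Ht. destruct (Req_dec m b) as [<-|Hmb']; [apply HPm; lra|exfalso].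
  destruct (Hstep m ltac:(lra) HPm) as [d [Hd Hd']].
  set (t' := Rmin (m + d / 2) b).
  assert (m < t' <= b) by (unfold t', Rmin; destruct (Rle_dec (m + d / 2) b); lra).
  assert (t' <= m + d / 2) by apply Rmin_l.
  assert (St' : S t')
    by (split; [lra|intros s Hs; destruct (Rle_dec s m); [apply HPm|apply Hd']; lra]).
  specialize (Hub t' St'). lra.
Qed.

Lemma continuity_pt_eq_of_dense (u v : R -> R) t : continuity_pt u t -> continuity_pt v t ->
  (forall d, d > 0 -> exists s, Rabs (s - t) < d /\ u s = v s) -> u t = v t.
Proof.
  intros Hu Hv Hdense. apply cond_eq. intros eps He.
  destruct (continuity_pt_eps _ _ (continuity_pt_minus _ _ _ Hu Hv) eps He) as [d [Hd Hd']].
  destruct (Hdense d Hd) as [s [Hs Es]]. specialize (Hd' s Hs).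
  unfold minus_fct in Hd'. rewrite Es, Rminus_eq_0, Rminus_0_l, Rabs_Ropp in Hd'. exact Hd'.
Qed.

Lemma cont_at_eq_of_dense (f1 f2 : R -> pt) t : cont_at f1 t -> cont_at f2 t ->
  (forall d, d > 0 -> exists s, Rabs (s - t) < d /\ f1 s = f2 s) -> f1 t = f2 t.
Proof.
  intros H1 H2 Hdense. apply cont_at_iff in H1 as [H11 H12], H2 as [H21 H22].
  rewrite (surjective_pairing (f1 t)), (surjective_pairing (f2 t)).
  f_equal; [apply (continuity_pt_eq_of_dense (fun s => fst (f1 s)) (fun s => fst (f2 s)))
           |apply (continuity_pt_eq_of_dense (fun s => snd (f1 s)) (fun s => snd (f2 s)))];
    auto; intros d Hd; destruct (Hdense d Hd) as [s [Hs Es]]; exists s; now rewrite Es.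
Qed.

Lemma ode_unique_fwd W phi1 phi2 a b : locally_lipschitz W -> a <= b ->
  (forall t, a <= t <= b -> cont_at phi1 t /\ cont_at phi2 t) ->
  (forall t, a < t < b -> solves W phi1 t /\ solves W phi2 t) ->
  phi1 a = phi2 a -> forall t, a <= t <= b -> phi1 t = phi2 t.
Proof.
  intros HL Hab Hc Hs E0. apply real_induction; [exact Hab|exact E0| |].
  - intros t Ht HP.
    destruct (ode_unique_local W phi1 phi2 t b HL ltac:(lra)) as [d [Hd Hd']];
      [intros s Hs'; apply Hc; lra|intros s Hs'; apply Hs; lra|apply HP; lra|].
    exists d. split; [exact Hd|]. intros s Hs1 Hs2. apply Hd'; lra.
  - intros t Ht HP. destruct (Hc t ltac:(lra)) as [C1 C2].
    apply cont_at_eq_of_dense; [exact C1|exact C2|]. intros d Hd.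
    exists (Rmax a (t - d / 2)). unfold Rmax. split; [|apply HP];
      destruct (Rle_dec a (t - d / 2)); try (rewrite Rabs_left); lra.
Qed.

Lemma ode_unique_bwd W phi1 phi2 a b : locally_lipschitz W -> a <= b ->
  (forall t, a <= t <= b -> cont_at phi1 t /\ cont_at phi2 t) ->
  (forall t, a < t < b -> solves W phi1 t /\ solves W phi2 t) ->
  phi1 b = phi2 b -> forall t, a <= t <= b -> phi1 t = phi2 t.
Proof.
  intros HL Hab Hc Hs Eb t Ht.
  rewrite <- (Ropp_involutive t).
  apply (ode_unique_fwd (opp_field W) (fun s => phi1 (- s)) (fun s => phi2 (- s)) (- b) (- a));
    [now apply locally_lipschitz_opp|lra| | |now rewrite Ropp_involutive|lra].
  - intros s Hs'. destruct (Hc (- s) ltac:(lra)) as [C1 C2].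
    split; apply cont_at_reverse; assumption.
  - intros s Hs'. destruct (Hs (- s) ltac:(lra)) as [S1 S2].
    split; apply solves_reverse; assumption.
Qed.

Lemma ode_agree_after W phi1 phi2 t e : locally_lipschitz W -> e > 0 ->
  (forall r, cont_at phi1 r /\ cont_at phi2 r) ->
  (forall r, t < r < t + e -> solves W phi1 r /\ solves W phi2 r) -> phi1 t = phi2 t ->
  exists d, d > 0 /\ forall s, t < s < t + d -> phi1 s = phi2 s.
Proof.
  intros HL He Hc Hs E. exists (e / 2). split; [lra|]. intros s Hs'.
  apply (ode_unique_fwd W phi1 phi2 t (t + e / 2)); auto; [lra| |lra].
  intros r Hr. apply Hs. lra.
Qed.

Lemma ode_agree_before W phi1 phi2 t e : locally_lipschitz W -> e > 0 ->
  (forall r, cont_at phi1 r /\ cont_at phi2 r) ->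
  (forall r, t - e < r < t -> solves W phi1 r /\ solves W phi2 r) -> phi1 t = phi2 t ->
  exists d, d > 0 /\ forall s, t - d < s < t -> phi1 s = phi2 s.
Proof.
  intros HL He Hc Hs E. exists (e / 2). split; [lra|]. intros s Hs'.
  apply (ode_unique_bwd W phi1 phi2 (t - e / 2) t); auto; [lra| |lra].
  intros r Hr. apply Hs. lra.
Qed.

(** * Local structure of Filippov trajectories *)

Definition is_C1_psvf (Z : psvf) : Prop :=
  is_C1 (sw Z) /\ is_C1_field (fX Z) /\ is_C1_field (fY Z).

Lemma is_psvf_C1 Z : is_psvf Z -> is_C1_psvf Z.
Proof.
  intros [Hs [[Hx1 Hx2] [[Hy1 Hy2] _]]].
  exact (conj (smooth_C1 _ Hs) (conj (conj (smooth_C1 _ Hx1) (smooth_C1 _ Hx2))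
                                    (conj (smooth_C1 _ Hy1) (smooth_C1 _ Hy2)))).
Qed.

Lemma global_traj_cont Z g : global_traj Z g -> forall t, cont_at g t.
Proof.
  intros Hg t. destruct (Hg t) as [e [He [_ Hp]]].
  destruct Hp as [[_ [H _]]|[[_ [H _]]|[_ [H _]]]]; apply H; lra.
Qed.

Lemma piece_Xpiece Z g a b :
  piece Z g a b -> (exists r, a < r < b /\ sw Z (g r) > 0) -> Xpiece Z g a b.
Proof.
  intros [H|[[_ [H _]]|[_ [_ H]]]] [r [Hr Hs]]; [exact H| |].
  - destruct (H r ltac:(lra)) as [_ H']. lra.
  - destruct (H r Hr) as [[Hi _] _]. unfold in_Sigma in Hi. lra.
Qed.

Lemma piece_Ypiece Z g a b :
  piece Z g a b -> (exists r, a < r < b /\ sw Z (g r) < 0) -> Ypiece Z g a b.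
Proof.
  intros [[_ [H _]]|[H|[_ [_ H]]]] [r [Hr Hs]]; [|exact H|].
  - destruct (H r ltac:(lra)) as [_ H']. lra.
  - destruct (H r Hr) as [[Hi _] _]. unfold in_Sigma in Hi. lra.
Qed.

Definition through_X (Z : psvf) (g : R -> pt) (t : R) : Prop :=
  exists e, e > 0 /\ Xpiece Z g (t - e) t /\ Xpiece Z g t (t + e).
Definition through_Y (Z : psvf) (g : R -> pt) (t : R) : Prop :=
  exists e, e > 0 /\ Ypiece Z g (t - e) t /\ Ypiece Z g t (t + e).

Lemma passes_through_XY Z g t : passes_through Z g t -> through_X Z g t \/ through_Y Z g t.
Proof. intros [e [He [[H1 H2]|[H1 H2]]]]; [left|right]; exists e; auto. Qed.

Lemma through_X_nonneg Z g t : through_X Z g t ->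
  exists e, e > 0 /\ forall r, t - e <= r <= t + e -> sw Z (g r) >= 0.
Proof.
  intros [e [He [[_ [S1 _]] [_ [S2 _]]]]]. exists e. split; [exact He|].
  intros r Hr. destruct (Rle_dec r t); [apply S1|apply S2]; lra.
Qed.

Lemma through_Y_nonpos Z g t : through_Y Z g t ->
  exists e, e > 0 /\ forall r, t - e <= r <= t + e -> sw Z (g r) <= 0.
Proof.
  intros [e [He [[_ [S1 _]] [_ [S2 _]]]]]. exists e. split; [exact He|].
  intros r Hr. destruct (Rle_dec r t); [apply S1|apply S2]; lra.
Qed.

Lemma through_X_of_pos Z g t d : passes_through Z g t -> d > 0 ->
  (forall r, t - d < r < t -> sw Z (g r) > 0) \/ (forall r, t < r < t + d -> sw Z (g r) > 0) ->
  through_X Z g t.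
Proof.
  intros Hp Hd Hpos. destruct (passes_through_XY Z g t Hp) as [HX|HY]; [exact HX|exfalso].
  destruct (through_Y_nonpos Z g t HY) as [e [He He']].
  pose proof (Rmin_pos_le e d He Hd).
  destruct Hpos as [Hpos|Hpos].
  - assert (sw Z (g (t - Rmin e d / 2)) > 0) by (apply Hpos; lra).
    assert (sw Z (g (t - Rmin e d / 2)) <= 0) by (apply He'; lra). lra.
  - assert (sw Z (g (t + Rmin e d / 2)) > 0) by (apply Hpos; lra).
    assert (sw Z (g (t + Rmin e d / 2)) <= 0) by (apply He'; lra). lra.
Qed.

Lemma through_Y_of_neg Z g t d : passes_through Z g t -> d > 0 ->
  (forall r, t - d < r < t -> sw Z (g r) < 0) \/ (forall r, t < r < t + d -> sw Z (g r) < 0) ->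
  through_Y Z g t.
Proof.
  intros Hp Hd Hneg. destruct (passes_through_XY Z g t Hp) as [HX|HY]; [exfalso|exact HY].
  destruct (through_X_nonneg Z g t HX) as [e [He He']].
  pose proof (Rmin_pos_le e d He Hd).
  destruct Hneg as [Hneg|Hneg].
  - assert (sw Z (g (t - Rmin e d / 2)) < 0) by (apply Hneg; lra).
    assert (sw Z (g (t - Rmin e d / 2)) >= 0) by (apply He'; lra). lra.
  - assert (sw Z (g (t + Rmin e d / 2)) < 0) by (apply Hneg; lra).
    assert (sw Z (g (t + Rmin e d / 2)) >= 0) by (apply He'; lra). lra.
Qed.

Lemma sewing_signs Z q : sewing Z q ->
  (Xf Z q < 0 /\ Yf Z q < 0) \/ (Xf Z q > 0 /\ Yf Z q > 0).
Proof.
  intros [_ H]. destruct (Rlt_le_dec (Xf Z q) 0); destruct (Rlt_le_dec (Yf Z q) 0);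
    [left; lra|right|right|right]; nra.
Qed.

Definition solves_after (W : pt -> pt) (g : R -> pt) (t : R) : Prop :=
  exists e, e > 0 /\ forall r, t < r < t + e -> solves W g r.
Definition solves_before (W : pt -> pt) (g : R -> pt) (t : R) : Prop :=
  exists e, e > 0 /\ forall r, t - e < r < t -> solves W g r.

Lemma solves_around W g t : (exists e, e > 0 /\ forall r, t - e < r < t + e -> solves W g r) ->
  solves_before W g t /\ solves_after W g t.
Proof.
  intros [e [He Hs]]. split; exists e; split; auto; intros r Hr; apply Hs; lra.
Qed.

(* At a point off Sigma or at a sewing point, the field followed just after (resp. just
   before) the point is determined by the point alone. *)
Definition field_after (Z : psvf) (q : pt) : pt -> pt :=
  if Rlt_dec 0 (sw Z q) then fX Z else if Rlt_dec (sw Z q) 0 then fY Z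
  else if Rlt_dec (Xf Z q) 0 then fY Z else fX Z.

Definition field_before (Z : psvf) (q : pt) : pt -> pt :=
  if Rlt_dec 0 (sw Z q) then fX Z else if Rlt_dec (sw Z q) 0 then fY Z
  else if Rlt_dec (Xf Z q) 0 then fX Z else fY Z.

Lemma field_after_lipschitz Z q : is_C1_psvf Z -> locally_lipschitz (field_after Z q).
Proof.
  intros [_ [HX HY]]. apply C1_field_locally_lipschitz in HX, HY.
  unfold field_after. repeat destruct Rlt_dec; assumption.
Qed.

Lemma field_before_lipschitz Z q : is_C1_psvf Z -> locally_lipschitz (field_before Z q).
Proof.
  intros [_ [HX HY]]. apply C1_field_locally_lipschitz in HX, HY.
  unfold field_before. repeat destruct Rlt_dec; assumption.
Qed.

Section Trajectory.

Variables (Z : psvf) (g : R -> pt).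
Hypotheses (HZ : is_C1_psvf Z) (Hg : global_traj Z g).

Lemma sw_traj_continuity : continuity (fun s => sw Z (g s)).
Proof.
  intro t. apply C1_continuity_pt_comp; [exact (proj1 HZ)|exact (global_traj_cont Z g Hg t)].
Qed.

Lemma sw_traj_sign_near t : sw Z (g t) <> 0 ->
  exists d, d > 0 /\ forall r, Rabs (r - t) < d -> sw Z (g r) * sw Z (g t) > 0.
Proof. apply (continuity_pt_sign_near (fun s => sw Z (g s))), sw_traj_continuity. Qed.

Lemma solves_of_sides W t e : is_C1_field W -> e > 0 ->
  (forall r, t - e < r < t -> solves W g r) -> (forall r, t < r < t + e -> solves W g r) ->
  forall r, t - e < r < t + e -> solves W g r.
Proof.
  intros HW He H1 H2.
  assert (Ht : solves W g t).
  { apply (solves_of_punctured W g t e HW He (global_traj_cont Z g Hg t)).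
    intros r Hr Hr'. apply Rabs_lt_between' in Hr'.
    destruct (Rlt_le_dec r t); [apply H1|apply H2]; lra. }
  intros r Hr. destruct (Rlt_le_dec r t); [apply H1; lra|].
  destruct (Req_dec r t) as [->|]; [exact Ht|apply H2; lra].
Qed.

Lemma solves_X_of_pos t : sw Z (g t) > 0 -> solves (fX Z) g t.
Proof.
  intro Hp. destruct (sw_traj_sign_near t ltac:(lra)) as [d [Hd Hd']].
  destruct (Hg t) as [e [He [Hl Hr]]].
  pose proof (Rmin_pos_le e d He Hd).
  apply piece_Xpiece in Hl as [_ [_ Hl]], Hr as [_ [_ Hr]].
  - apply (solves_of_sides _ t e (proj1 (proj2 HZ)) He Hl Hr). lra.
  - exists (t + Rmin e d / 2). split; [lra|].
    assert (sw Z (g (t + Rmin e d / 2)) * sw Z (g t) > 0)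
      by (apply Hd'; rewrite Rabs_pos_eq; lra). nra.
  - exists (t - Rmin e d / 2). split; [lra|].
    assert (sw Z (g (t - Rmin e d / 2)) * sw Z (g t) > 0)
      by (apply Hd'; rewrite Rabs_left; lra). nra.
Qed.

Lemma solves_Y_of_neg t : sw Z (g t) < 0 -> solves (fY Z) g t.
Proof.
  intro Hp. destruct (sw_traj_sign_near t ltac:(lra)) as [d [Hd Hd']].
  destruct (Hg t) as [e [He [Hl Hr]]].
  pose proof (Rmin_pos_le e d He Hd).
  apply piece_Ypiece in Hl as [_ [_ Hl]], Hr as [_ [_ Hr]].
  - apply (solves_of_sides _ t e (proj2 (proj2 HZ)) He Hl Hr). lra.
  - exists (t + Rmin e d / 2). split; [lra|].
    assert (sw Z (g (t + Rmin e d / 2)) * sw Z (g t) > 0)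
      by (apply Hd'; rewrite Rabs_pos_eq; lra). nra.
  - exists (t - Rmin e d / 2). split; [lra|].
    assert (sw Z (g (t - Rmin e d / 2)) * sw Z (g t) > 0)
      by (apply Hd'; rewrite Rabs_left; lra). nra.
Qed.

Lemma through_X_solves t : through_X Z g t ->
  exists e, e > 0 /\ forall r, t - e < r < t + e -> solves (fX Z) g r.
Proof.
  intros [e [He [[_ [_ S1]] [_ [_ S2]]]]].
  exists e. split; [exact He|]. exact (solves_of_sides _ t e (proj1 (proj2 HZ)) He S1 S2).
Qed.

Lemma through_Y_solves t : through_Y Z g t ->
  exists e, e > 0 /\ forall r, t - e < r < t + e -> solves (fY Z) g r.
Proof.
  intros [e [He [[_ [_ S1]] [_ [_ S2]]]]].
  exists e. split; [exact He|]. exact (solves_of_sides _ t e (proj2 (proj2 HZ)) He S1 S2).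
Qed.

Lemma traj_sign_before W t e : is_C1_field W -> e > 0 ->
  (forall r, t - e < r < t -> solves W g r) -> sw Z (g t) = 0 -> lie W (sw Z) (g t) <> 0 ->
  exists d, d > 0 /\ d <= e /\ forall r, t - d < r < t -> sw Z (g r) * lie W (sw Z) (g t) < 0.
Proof.
  intros HW He Hs H0 Hne.
  assert (Hc : forall r, cont_at g r) by exact (global_traj_cont Z g Hg).
  destruct (sign_before_zero (sw Z) W g t e (proj1 HZ) HW He (fun r _ => Hc r) Hs H0 Hne)
    as [d [Hd Hd']].
  exists (Rmin d e). pose proof (Rmin_l d e). pose proof (Rmin_r d e).
  split; [now apply Rmin_pos|split; [lra|]]. intros r Hr. apply Hd'. lra.
Qed.

Lemma traj_sign_after W t e : is_C1_field W -> e > 0 ->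
  (forall r, t < r < t + e -> solves W g r) -> sw Z (g t) = 0 -> lie W (sw Z) (g t) <> 0 ->
  exists d, d > 0 /\ d <= e /\ forall r, t < r < t + d -> sw Z (g r) * lie W (sw Z) (g t) > 0.
Proof.
  intros HW He Hs H0 Hne.
  assert (Hc : forall r, cont_at g r) by exact (global_traj_cont Z g Hg).
  destruct (sign_after_zero (sw Z) W g t e (proj1 HZ) HW He (fun r _ => Hc r) Hs H0 Hne)
    as [d [Hd Hd']].
  exists (Rmin d e). pose proof (Rmin_l d e). pose proof (Rmin_r d e).
  split; [now apply Rmin_pos|split; [lra|]]. intros r Hr. apply Hd'. lra.
Qed.

Lemma no_sliding_near_sewing t : sewing Z (g t) ->
  exists d, d > 0 /\ forall r, Rabs (r - t) < d -> ~ slide_esc Z (g r).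
Proof.
  intros [_ Hp]. destruct HZ as [Hs [HX HY]]. pose proof (global_traj_cont Z g Hg t) as Hc.
  destruct (continuity_pt_sign_near (fun s => Xf Z (g s) * Yf Z (g s)) t) as [d [Hd Hd']];
    [apply continuity_pt_mult; now apply lie_continuity_pt|lra|].
  exists d. split; [exact Hd|]. intros r Hr [_ Hsl]. specialize (Hd' r Hr). simpl in Hd'. nra.
Qed.

Lemma sewing_pieces t : sewing Z (g t) -> exists e, e > 0 /\
  (Xpiece Z g (t - e) t \/ Ypiece Z g (t - e) t) /\ (Xpiece Z g t (t + e) \/ Ypiece Z g t (t + e)).
Proof.
  intro Hs. destruct (no_sliding_near_sewing t Hs) as [d [Hd Hd']].
  destruct (Hg t) as [e [He [Hl Hr]]]. exists e.
  pose proof (Rmin_pos_le e d He Hd).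
  split; [exact He|split].
  - destruct Hl as [HX|[HY|[_ [_ HS]]]]; [now left|now right|exfalso].
    apply (Hd' (t - Rmin e d / 2)); [rewrite Rabs_left; lra|apply HS; lra].
  - destruct Hr as [HX|[HY|[_ [_ HS]]]]; [now left|now right|exfalso].
    apply (Hd' (t + Rmin e d / 2)); [rewrite Rabs_pos_eq; lra|apply HS; lra].
Qed.

Lemma crossing_down t : sewing Z (g t) -> Xf Z (g t) < 0 -> exists e, e > 0 /\
  (forall r, t - e < r < t -> solves (fX Z) g r /\ sw Z (g r) > 0) /\
  (forall r, t < r < t + e -> solves (fY Z) g r /\ sw Z (g r) < 0).
Proof.
  intros Hs Hx. destruct HZ as [_ [HX HY]].
  assert (Hy : Yf Z (g t) < 0) by (destruct (sewing_signs Z _ Hs); lra).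
  destruct (sewing_pieces t Hs) as [e [He [Hl Hr]]]. destruct Hs as [H0 _].
  destruct Hl as [[_ [_ SX]]|[_ [PY SY]]]; [|exfalso].
  2:{ destruct (traj_sign_before (fY Z) t e HY He SY H0 ltac:(fold (Yf Z); lra))
        as [d [Hd [Hde Hd']]].
      specialize (Hd' (t - d / 2) ltac:(lra)). destruct (PY (t - d / 2) ltac:(lra)) as [_ Hn].
      fold (Yf Z) in Hd'. nra. }
  destruct Hr as [[_ [PX SX']]|[_ [_ SY]]]; [exfalso|].
  { destruct (traj_sign_after (fX Z) t e HX He SX' H0 ltac:(fold (Xf Z); lra))
      as [d [Hd [Hde Hd']]].
    specialize (Hd' (t + d / 2) ltac:(lra)). destruct (PX (t + d / 2) ltac:(lra)) as [_ Hn].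
    fold (Xf Z) in Hd'. nra. }
  destruct (traj_sign_before (fX Z) t e HX He SX H0 ltac:(fold (Xf Z); lra))
    as [d1 [Hd1 [Hd1e D1]]].
  destruct (traj_sign_after (fY Z) t e HY He SY H0 ltac:(fold (Yf Z); lra))
    as [d2 [Hd2 [Hd2e D2]]].
  fold (Xf Z) in D1. fold (Yf Z) in D2.
  exists (Rmin d1 d2). pose proof (Rmin_l d1 d2). pose proof (Rmin_r d1 d2).
  split; [now apply Rmin_pos|split]; intros r Hr.
  - split; [apply SX; lra|]. specialize (D1 r ltac:(lra)). nra.
  - split; [apply SY; lra|]. specialize (D2 r ltac:(lra)). nra.
Qed.

Lemma crossing_up t : sewing Z (g t) -> Xf Z (g t) > 0 -> exists e, e > 0 /\
  (forall r, t - e < r < t -> solves (fY Z) g r /\ sw Z (g r) < 0) /\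
  (forall r, t < r < t + e -> solves (fX Z) g r /\ sw Z (g r) > 0).
Proof.
  intros Hs Hx. destruct HZ as [_ [HX HY]].
  assert (Hy : Yf Z (g t) > 0) by (destruct (sewing_signs Z _ Hs); lra).
  destruct (sewing_pieces t Hs) as [e [He [Hl Hr]]]. destruct Hs as [H0 _].
  destruct Hl as [[_ [PX SX]]|[_ [_ SY]]]; [exfalso|].
  { destruct (traj_sign_before (fX Z) t e HX He SX H0 ltac:(fold (Xf Z); lra))
      as [d [Hd [Hde Hd']]].
    specialize (Hd' (t - d / 2) ltac:(lra)). destruct (PX (t - d / 2) ltac:(lra)) as [_ Hn].
    fold (Xf Z) in Hd'. nra. }
  destruct Hr as [[_ [_ SX]]|[_ [PY SY']]]; [|exfalso].
  2:{ destruct (traj_sign_after (fY Z) t e HY He SY' H0 ltac:(fold (Yf Z); lra))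
        as [d [Hd [Hde Hd']]].
      specialize (Hd' (t + d / 2) ltac:(lra)). destruct (PY (t + d / 2) ltac:(lra)) as [_ Hn].
      fold (Yf Z) in Hd'. nra. }
  destruct (traj_sign_before (fY Z) t e HY He SY H0 ltac:(fold (Yf Z); lra))
    as [d1 [Hd1 [Hd1e D1]]].
  destruct (traj_sign_after (fX Z) t e HX He SX H0 ltac:(fold (Xf Z); lra))
    as [d2 [Hd2 [Hd2e D2]]].
  fold (Yf Z) in D1. fold (Xf Z) in D2.
  exists (Rmin d1 d2). pose proof (Rmin_l d1 d2). pose proof (Rmin_r d1 d2).
  split; [now apply Rmin_pos|split]; intros r Hr.
  - split; [apply SY; lra|]. specialize (D1 r ltac:(lra)). nra.
  - split; [apply SX; lra|]. specialize (D2 r ltac:(lra)). nra.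
Qed.

Lemma solves_X_near_pos t : sw Z (g t) > 0 ->
  exists e, e > 0 /\ forall r, Rabs (r - t) < e -> solves (fX Z) g r.
Proof.
  intro Hp. destruct (sw_traj_sign_near t ltac:(lra)) as [d [Hd Hd']].
  exists d. split; [exact Hd|]. intros r Hr. apply solves_X_of_pos. specialize (Hd' r Hr). nra.
Qed.

Lemma solves_Y_near_neg t : sw Z (g t) < 0 ->
  exists e, e > 0 /\ forall r, Rabs (r - t) < e -> solves (fY Z) g r.
Proof.
  intro Hp. destruct (sw_traj_sign_near t ltac:(lra)) as [d [Hd Hd']].
  exists d. split; [exact Hd|]. intros r Hr. apply solves_Y_of_neg. specialize (Hd' r Hr). nra.
Qed.

Lemma regular_field_after t : sw Z (g t) <> 0 \/ sewing Z (g t) ->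
  solves_after (field_after Z (g t)) g t.
Proof.
  intro Hreg. unfold field_after. destruct (Rlt_dec 0 (sw Z (g t))) as [Hp|Hp].
  { destruct (solves_X_near_pos t Hp) as [e [He He']].
    exists e. split; [exact He|]. intros r Hr. apply He'. apply Rabs_lt_between'. lra. }
  destruct (Rlt_dec (sw Z (g t)) 0) as [Hn|Hn].
  { destruct (solves_Y_near_neg t Hn) as [e [He He']].
    exists e. split; [exact He|]. intros r Hr. apply He'. apply Rabs_lt_between'. lra. }
  assert (Hs : sewing Z (g t)) by (destruct Hreg; [lra|assumption]).
  destruct (Rlt_dec (Xf Z (g t)) 0) as [Hx|Hx].
  - destruct (crossing_down t Hs Hx) as [e [He [_ He']]].
    exists e. split; [exact He|]. intros r Hr. apply He'. lra.
  - destruct (crossing_up t Hs) as [e [He [_ He']]];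
      [destruct (sewing_signs Z _ Hs); lra|].
    exists e. split; [exact He|]. intros r Hr. apply He'. lra.
Qed.

Lemma regular_field_before t : sw Z (g t) <> 0 \/ sewing Z (g t) ->
  solves_before (field_before Z (g t)) g t.
Proof.
  intro Hreg. unfold field_before. destruct (Rlt_dec 0 (sw Z (g t))) as [Hp|Hp].
  { destruct (solves_X_near_pos t Hp) as [e [He He']].
    exists e. split; [exact He|]. intros r Hr. apply He'. apply Rabs_lt_between'. lra. }
  destruct (Rlt_dec (sw Z (g t)) 0) as [Hn|Hn].
  { destruct (solves_Y_near_neg t Hn) as [e [He He']].
    exists e. split; [exact He|]. intros r Hr. apply He'. apply Rabs_lt_between'. lra. }
  assert (Hs : sewing Z (g t)) by (destruct Hreg; [lra|assumption]).
  destruct (Rlt_dec (Xf Z (g t)) 0) as [Hx|Hx].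
  - destruct (crossing_down t Hs Hx) as [e [He [He' _]]].
    exists e. split; [exact He|]. intros r Hr. apply He'. lra.
  - destruct (crossing_up t Hs) as [e [He [He' _]]];
      [destruct (sewing_signs Z _ Hs); lra|].
    exists e. split; [exact He|]. intros r Hr. apply He'. lra.
Qed.

Lemma shift_agree_after W t c : locally_lipschitz W ->
  solves_after W g t -> solves_after W g (t + c) -> g t = g (t + c) ->
  exists d, d > 0 /\ forall s, t < s < t + d -> g s = g (s + c).
Proof.
  intros HL [e1 [He1 H1]] [e2 [He2 H2]] E.
  pose proof (Rmin_l e1 e2). pose proof (Rmin_r e1 e2).
  apply (ode_agree_after W g (fun s => g (s + c)) t (Rmin e1 e2) HL (Rmin_pos _ _ He1 He2));
    [|intros r Hr|exact E].
  - intro r. split; [|apply cont_at_shift]; apply (global_traj_cont Z g Hg).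
  - split; [apply H1; lra|apply solves_shift, H2; lra].
Qed.

Lemma shift_agree_before W t c : locally_lipschitz W ->
  solves_before W g t -> solves_before W g (t + c) -> g t = g (t + c) ->
  exists d, d > 0 /\ forall s, t - d < s < t -> g s = g (s + c).
Proof.
  intros HL [e1 [He1 H1]] [e2 [He2 H2]] E.
  pose proof (Rmin_l e1 e2). pose proof (Rmin_r e1 e2).
  apply (ode_agree_before W g (fun s => g (s + c)) t (Rmin e1 e2) HL (Rmin_pos _ _ He1 He2));
    [|intros r Hr|exact E].
  - intro r. split; [|apply cont_at_shift]; apply (global_traj_cont Z g Hg).
  - split; [apply H1; lra|apply solves_shift, H2; lra].
Qed.

Lemma shift_agree_forward a b c : a <= b -> g a = g (a + c) ->
  (forall t, a <= t < b -> (forall s, a <= s <= t -> g s = g (s + c)) ->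
     exists W, locally_lipschitz W /\ solves_after W g t /\ solves_after W g (t + c)) ->
  forall t, a <= t <= b -> g t = g (t + c).
Proof.
  intros Hab Ea Hfield. apply real_induction; [exact Hab|exact Ea| |].
  - intros t Ht HQ. destruct (Hfield t Ht HQ) as [W [HW [A1 A2]]].
    destruct (shift_agree_after W t c HW A1 A2 (HQ t ltac:(lra))) as [d [Hd Hd']].
    exists d. split; [exact Hd|]. intros s Hs _. now apply Hd'.
  - intros t Ht HQ. pose proof (global_traj_cont Z g Hg) as Hc.
    apply (cont_at_eq_of_dense g (fun s => g (s + c))); [apply Hc|apply cont_at_shift, Hc|].
    intros d Hd. set (w := Rmax a (t - d / 2)).
    assert (a <= w < t /\ t - d / 2 <= w) by (unfold w, Rmax; destruct Rle_dec; lra).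
    exists w. split; [rewrite Rabs_left; lra|]. apply HQ. lra.
Qed.

Lemma shift_agree_backward a b c : a <= b -> g b = g (b + c) ->
  (forall t, a < t <= b -> (forall s, t <= s <= b -> g s = g (s + c)) ->
     exists W, locally_lipschitz W /\ solves_before W g t /\ solves_before W g (t + c)) ->
  forall t, a <= t <= b -> g t = g (t + c).
Proof.
  intros Hab Eb Hfield t Ht.
  set (P := fun u => g (- u) = g (- u + c)).
  rewrite <- (Ropp_involutive t).
  apply (real_induction (- b) (- a) P); [lra|unfold P; now rewrite Ropp_involutive| | |lra].
  - intros u Hu HQ. destruct (Hfield (- u)) as [W [HW [A1 A2]]];
      [lra|intros s Hs; rewrite <- (Ropp_involutive s); apply HQ; lra|].
    destruct (shift_agree_before W (- u) c HW A1 A2) as [d [Hd Hd']]; [apply HQ; lra|].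
    exists d. split; [exact Hd|]. intros s Hs _. unfold P. apply Hd'. lra.
  - intros u Hu HQ. pose proof (global_traj_cont Z g Hg) as Hc. unfold P.
    apply (cont_at_eq_of_dense g (fun s => g (s + c))); [apply Hc|apply cont_at_shift, Hc|].
    intros d Hd. set (w := Rmin b (- u + d / 2)).
    assert (- u < w <= b /\ w <= - u + d / 2) by (unfold w, Rmin; destruct Rle_dec; lra).
    exists w. split; [rewrite Rabs_pos_eq; lra|].
    rewrite <- (Ropp_involutive w). apply HQ. lra.
Qed.

(* A solution of [W] through [g b] crosses to the other side of Sigma at once, so it cannot
   stay in [S] beyond [g b]; before that it follows the trajectory by uniqueness. *)
Lemma reach_by_arc W (S : pt -> Prop) a b x y : is_C1_field W -> a <= b ->
  (forall r, a < r < b -> solves W g r) -> (forall t, a <= t <= b -> S (g t)) ->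
  (forall q, S q -> exists t, a <= t <= b /\ g t = q) ->
  sw Z (g b) = 0 -> lie W (sw Z) (g b) <> 0 ->
  (forall q, S q -> sw Z q * lie W (sw Z) (g b) <= 0) ->
  reach_by W (fun _ => True) S x y <->
  exists t1 t2, a <= t1 <= t2 /\ t2 <= b /\ g t1 = x /\ g t2 = y.
Proof.
  intros HW Hab Hs HS Hon Hb0 Hlie Hside. pose proof (global_traj_cont Z g Hg) as Hc. split.
  - intros [T [psi [HT [P0 [PT [HSpsi HCpsi]]]]]].
    destruct (Hon x) as [ta [Hta Ea]]; [rewrite <- P0; apply HSpsi; lra|].
    assert (U : forall m, 0 <= m <= T -> m <= b - ta -> psi m = g (m + ta)).
    { intros m Hm Hm'.
      apply (ode_unique_fwd W psi (fun r => g (r + ta)) 0 m (C1_field_locally_lipschitz W HW));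
        [lra| | |rewrite P0, Rplus_0_l; now symmetry|lra].
      - intros r Hr. split; [apply HSpsi; lra|apply cont_at_shift, Hc].
      - intros r Hr. split; [apply HCpsi; lra|apply solves_shift, Hs; lra]. }
    destruct (Rle_dec T (b - ta)).
    + exists ta, (T + ta). repeat split; try lra; [exact Ea|].
      rewrite <- PT. symmetry. apply U; lra.
    + exfalso. set (rs := b - ta).
      assert (Prs : psi rs = g b) by (rewrite U by (unfold rs; lra); unfold rs; f_equal; ring).
      destruct (sign_after_zero (sw Z) W psi rs (T - rs) (proj1 HZ) HW) as [d [Hd Hd']];
        [unfold rs in *; lra|intros r Hr; apply HSpsi; unfold rs in *; lra
        |intros r Hr; apply HCpsi; unfold rs in *; lra|now rewrite Prs|now rewrite Prs|].
      set (r := rs + Rmin d (T - rs) / 2).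
      pose proof (Rmin_l d (T - rs)). pose proof (Rmin_r d (T - rs)).
      pose proof (Rmin_pos d (T - rs) Hd ltac:(unfold rs in *; lra)).
      specialize (Hd' r ltac:(unfold r; lra)). rewrite Prs in Hd'.
      pose proof (Hside (psi r) (proj1 (HSpsi r ltac:(unfold r, rs in *; lra)))). lra.
  - intros [t1 [t2 [H1 [H2 [E1 E2]]]]].
    exists (t2 - t1), (fun r => g (r + t1)).
    split; [lra|split; [now rewrite Rplus_0_l|]].
    split; [now replace (t2 - t1 + t1) with t2 by ring|].
    split; intros t Ht; [split; [apply HS; lra|apply cont_at_shift, Hc]|].
    split; [exact I|apply solves_shift, Hs; lra].
Qed.

Lemma arc_match W a1 b1 a2 b2 : locally_lipschitz W -> a1 < b1 -> a2 < b2 ->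
  (forall r, a1 < r < b1 -> solves W g r /\ sw Z (g r) <> 0) ->
  (forall r, a2 < r < b2 -> solves W g r /\ sw Z (g r) <> 0) ->
  sw Z (g b1) = 0 -> sw Z (g b2) = 0 -> g a1 = g a2 ->
  b1 - a1 = b2 - a2 /\ g b1 = g b2.
Proof.
  intros HL H1 H2 S1 S2 Z1 Z2 E.
  set (m := Rmin (b1 - a1) (b2 - a2)).
  assert (Hm : m > 0) by (unfold m; apply Rmin_pos; lra).
  assert (U : g (m + a1) = g (m + a2)).
  { apply (ode_unique_fwd W (fun r => g (r + a1)) (fun r => g (r + a2)) 0 m HL);
      [lra| | |now rewrite !Rplus_0_l|lra].
    - intros t _. split; apply cont_at_shift, (global_traj_cont Z g Hg).
    - pose proof (Rmin_l (b1 - a1) (b2 - a2)). pose proof (Rmin_r (b1 - a1) (b2 - a2)).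
      intros t Ht. split; apply solves_shift; [apply S1|apply S2]; unfold m in *; lra. }
  destruct (Rtotal_order (b1 - a1) (b2 - a2)) as [Hlt|[Heq|Hgt]].
  - exfalso. replace (m + a1) with b1 in U by (unfold m; rewrite Rmin_left; lra).
    apply (proj2 (S2 (m + a2) ltac:(unfold m; rewrite Rmin_left; lra))). now rewrite <- U.
  - split; [exact Heq|].
    now replace (m + a1) with b1 in U by (unfold m; rewrite Rmin_left; lra);
      replace (m + a2) with b2 in U by (unfold m; rewrite Rmin_left; lra).
  - exfalso. replace (m + a2) with b2 in U by (unfold m; rewrite Rmin_right; lra).
    apply (proj2 (S1 (m + a1) ltac:(unfold m; rewrite Rmin_right; lra))). now rewrite U.
Qed.

(* By [arc_match], a point met twice would force the two end points to coincide. *)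
Lemma two_arcs_injective W a m b : locally_lipschitz W -> a < m < b ->
  (forall r, a < r < b -> r <> m -> solves W g r /\ sw Z (g r) <> 0) ->
  sw Z (g m) = 0 -> sw Z (g b) = 0 -> g m <> g b ->
  forall t t', a < t < b -> a < t' < b -> t <> m -> t' <> m -> g t = g t' -> t = t'.
Proof.
  intros HL Hamb Harc Zm Zb Hmb t t' Ht Ht' Htm Ht'm E.
  set (next := fun x => if Rlt_dec x m then m else b).
  assert (Hnext : forall x, a < x < b -> x <> m -> x < next x /\ sw Z (g (next x)) = 0 /\
            (next x = m \/ next x = b) /\
            forall r, x < r < next x -> solves W g r /\ sw Z (g r) <> 0).
  { intros x Hx Hxm. unfold next. destruct (Rlt_dec x m) as [Hlt|Hge].
    - split; [lra|split; [exact Zm|split; [now left|]]]. intros r Hr. apply Harc; lra.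
    - split; [lra|split; [exact Zb|split; [now right|]]]. intros r Hr. apply Harc; lra. }
  destruct (Hnext t Ht Htm) as [N1 [Z1 [Q1 A1]]].
  destruct (Hnext t' Ht' Ht'm) as [N2 [Z2 [Q2 A2]]].
  destruct (arc_match W t (next t) t' (next t') HL N1 N2 A1 A2 Z1 Z2 E) as [D Eg].
  destruct Q1 as [Q1|Q1]; destruct Q2 as [Q2|Q2]; rewrite Q1, Q2 in *; try lra;
    exfalso; apply Hmb; congruence.
Qed.

End Trajectory.

(** * Figure eights and Sigma-equivalence *)

Lemma Rmax_abs_formula x y : Rmax x y = (x + y + Rabs (x - y)) / 2.
Proof. unfold Rmax, Rabs. destruct Rle_dec; destruct Rcase_abs; lra. Qed.

Lemma continuity_pt_Rmax f1 f2 t : continuity_pt f1 t -> continuity_pt f2 t ->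
  continuity_pt (fun s => Rmax (f1 s) (f2 s)) t.
Proof.
  intros H1 H2.
  apply (continuity_pt_ext (fun s => (f1 s + f2 s + Rabs (f1 s - f2 s)) * / 2));
    [intro; now rewrite Rmax_abs_formula|].
  apply continuity_pt_mult; [|apply continuity_pt_const; now intros x y].
  apply continuity_pt_plus; [now apply continuity_pt_plus|].
  apply (continuity_pt_comp (fun s => f1 s - f2 s) Rabs);
    [now apply continuity_pt_minus|apply Rcontinuity_abs].
Qed.

Definition box_dist (a b : pt) : R := Rmax (Rabs (fst a - fst b)) (Rabs (snd a - snd b)).

Lemma box_dist_pos a b : a <> b -> box_dist a b > 0.
Proof.
  intro Hne. unfold box_dist.
  destruct (Req_dec (fst a) (fst b)) as [E1|N1].
  - destruct (Req_dec (snd a) (snd b)) as [E2|N2].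
    + exfalso. apply Hne. rewrite (surjective_pairing a), (surjective_pairing b). now f_equal.
    + apply Rlt_le_trans with (Rabs (snd a - snd b)); [|apply Rmax_r].
      apply Rabs_pos_lt. intro. apply N2. lra.
  - apply Rlt_le_trans with (Rabs (fst a - fst b)); [|apply Rmax_l].
    apply Rabs_pos_lt. intro. apply N1. lra.
Qed.

Lemma box_dist_continuity_pt (G : R -> pt) q t : cont_at G t ->
  continuity_pt (fun s => box_dist (G s) q) t.
Proof.
  intro Hc. apply cont_at_iff in Hc as [H1 H2]. unfold box_dist.
  apply continuity_pt_Rmax; apply (continuity_pt_comp _ Rabs); try apply Rcontinuity_abs;
    apply continuity_pt_minus; auto; apply continuity_pt_const; now intros x y.
Qed.

(* Compactness argument: the modulus of continuity at [q0] is the minimum over [a, b] of the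
   continuous function [max (dist (F x) q0) (eps - dist (Bf x) (Bf x0))], which is positive
   because [Bf] factors through the fibres of [F]. *)
Lemma rel_continuous_factor (F Bf : R -> pt) a b (L : pt -> Prop) (sg : pt -> R) : a <= b ->
  (forall x, a <= x <= b -> cont_at F x) -> (forall x, a <= x <= b -> cont_at Bf x) ->
  (forall x y, a <= x <= b -> a <= y <= b -> F x = F y -> Bf x = Bf y) ->
  (forall q, L q -> a <= sg q <= b /\ F (sg q) = q) ->
  rel_continuous L (fun q => Bf (sg q)).
Proof.
  intros Hab HF HB Hfib Hsg q0 Lq0 eps He.
  destruct (Hsg q0 Lq0) as [Hx0 E0]. set (x0 := sg q0) in *.
  set (M := fun x => Rmax (box_dist (F x) q0) (eps - box_dist (Bf x) (Bf x0))).
  assert (Mpos : forall x, a <= x <= b -> M x > 0).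
  { intros x Hx. unfold M.
    destruct (Rlt_le_dec (box_dist (Bf x) (Bf x0)) eps);
      [eapply Rlt_le_trans; [|apply Rmax_r]; lra|].
    eapply Rlt_le_trans; [|apply Rmax_l]. apply box_dist_pos. intro E.
    assert (Bf x = Bf x0) as EB by (apply Hfib; auto; congruence).
    rewrite EB in r. unfold box_dist in r.
    rewrite !Rminus_eq_0, Rabs_R0, Rmax_left in r by lra. lra. }
  destruct (continuity_ab_min M a b Hab) as [xm [Hmin Hxm]].
  { intros x Hx. apply continuity_pt_Rmax; [now apply box_dist_continuity_pt, HF|].
    apply continuity_pt_minus; [apply continuity_pt_const; now intros u v|].
    now apply box_dist_continuity_pt, HB. }
  exists (M xm). split; [now apply Mpos|]. intros q Lq H1 H2.
  destruct (Hsg q Lq) as [Hx E]. specialize (Hmin (sg q) Hx).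
  assert (Hq : box_dist (F (sg q)) q0 < M xm)
    by (rewrite E; unfold box_dist; now apply Rmax_lub_lt).
  pose proof (Mpos xm Hxm) as Hpos.
  assert (Hn : box_dist (Bf (sg q)) (Bf x0) < eps).
  { change (M (sg q)) with
      (Rmax (box_dist (F (sg q)) q0) (eps - box_dist (Bf (sg q)) (Bf x0))) in Hmin.
    unfold Rmax in Hmin. destruct Rle_dec; lra. }
  unfold box_dist in Hn. now apply Rmax_Rlt in Hn.
Qed.

Lemma reach_by_without_condition W (C S : pt -> Prop) a b : (forall x, S x -> ~ C x) ->
  reach_by W C S a b <-> a = b /\ S a.
Proof.
  intro HSC. split.
  - intros [T [psi [HT [P0 [PT [HS HC]]]]]].
    destruct (Req_dec T 0) as [->|HT0].
    + rewrite <- P0, <- PT. split; [reflexivity|apply HS; lra].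
    + exfalso. apply (HSC (psi (T / 2))); [apply HS|apply HC]; lra.
  - intros [<- Ha]. exists 0, (fun _ => a).
    split; [lra|split; [reflexivity|split; [reflexivity|split]]].
    + intros t _. split; [exact Ha|apply cont_at_const].
    + intros t Ht. lra.
Qed.

Record knots : Type := Knots { kn0 : R; kn1 : R; kn2 : R; kn3 : R; kn4 : R }.

Definition increasing_knots (k : knots) : Prop :=
  kn0 k < kn1 k /\ kn1 k < kn2 k /\ kn2 k < kn3 k /\ kn3 k < kn4 k.

Definition in_span (k : knots) (x : R) : Prop := kn0 k <= x <= kn4 k.

Definition is_knot (k : knots) (x : R) : Prop :=
  x = kn0 k \/ x = kn1 k \/ x = kn2 k \/ x = kn3 k \/ x = kn4 k.

(* The figure eight is the interval [kn0, kn4] with kn0 glued to kn4 and kn1 to kn3. *)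
Definition eight_glued (k : knots) (x y : R) : Prop :=
  x = y \/ (x = kn0 k /\ y = kn4 k) \/ (x = kn4 k /\ y = kn0 k) \/
  (x = kn1 k /\ y = kn3 k) \/ (x = kn3 k /\ y = kn1 k).

Set Implicit Arguments.

Record figure_eight (Z : psvf) (L : pt -> Prop) (G : R -> pt) (k : knots) : Prop := {
  eight_increasing : increasing_knots k;
  eight_cont : forall x, in_span k x -> cont_at G x;
  eight_onto : forall q, L q <-> exists x, in_span k x /\ G x = q;
  eight_glue : forall x y, in_span k x -> in_span k y -> G x = G y <-> eight_glued k x y;
  eight_sigma : forall x, in_span k x -> sw Z (G x) = 0 <-> is_knot k x;
  eight_reach_X : forall a b, L a -> L b ->
    reach_by (fX Z) (fun _ => True) (fun x => L x /\ sw Z x >= 0) a b <->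
    exists x y, kn0 k <= x <= y /\ y <= kn2 k /\ G x = a /\ G y = b;
  eight_reach_Y : forall a b, L a -> L b ->
    reach_by (fY Z) (fun _ => True) (fun x => L x /\ sw Z x <= 0) a b <->
    exists x y, kn2 k <= x <= y /\ y <= kn4 k /\ G x = a /\ G y = b;
  eight_no_sliding : forall q, L q -> ~ slide_esc Z q }.

Unset Implicit Arguments.

Definition eight_coord (G : R -> pt) (k : knots) (q : pt) : R :=
  epsilon (inhabits 0) (fun x => in_span k x /\ G x = q).

Lemma eight_coord_spec {Z L G k} q : figure_eight Z L G k -> L q ->
  in_span k (eight_coord G k q) /\ G (eight_coord G k q) = q.
Proof.
  intros H Hq. apply (epsilon_spec (inhabits 0) (fun x => in_span k x /\ G x = q)).
  now apply (eight_onto H).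
Qed.

Definition eight_map (G G' : R -> pt) (k : knots) (q : pt) : pt := G' (eight_coord G k q).

Section EightMap.

Context {Z Z' : psvf} {L L' : pt -> Prop} {G G' : R -> pt} {k : knots}.
Hypotheses (H8 : figure_eight Z L G k) (H8' : figure_eight Z' L' G' k).

Lemma eight_map_in q : L q -> L' (eight_map G G' k q).
Proof.
  intro Hq. apply (eight_onto H8'). exists (eight_coord G k q).
  split; [exact (proj1 (eight_coord_spec q H8 Hq))|reflexivity].
Qed.

Lemma eight_transfer x q : in_span k x -> L q -> G x = q <-> G' x = eight_map G G' k q.
Proof.
  intros Hx Hq. destruct (eight_coord_spec q H8 Hq) as [Hc Ec]. unfold eight_map.
  rewrite <- Ec at 1. rewrite (eight_glue H8 Hx Hc).
  now rewrite (eight_glue H8' Hx Hc).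
Qed.

Lemma eight_map_cancel q : L q -> eight_map G' G k (eight_map G G' k q) = q.
Proof.
  intro Hq. destruct (eight_coord_spec _ H8' (eight_map_in q Hq)) as [Hc Ec].
  now apply eight_transfer.
Qed.

Lemma eight_map_continuous : rel_continuous L (eight_map G G' k).
Proof.
  destruct (eight_increasing H8) as (K1 & K2 & K3 & K4).
  apply (rel_continuous_factor G G' (kn0 k) (kn4 k)); [lra| | | |].
  - exact (eight_cont H8).
  - exact (eight_cont H8').
  - intros x y Hx Hy E. apply (eight_glue H8'); auto.
    now apply (eight_glue H8).
  - intros q Hq. exact (eight_coord_spec q H8 Hq).
Qed.

Lemma eight_map_sigma q : L q -> sw Z q = 0 <-> sw Z' (eight_map G G' k q) = 0.
Proof.
  intro Hq. destruct (eight_coord_spec q H8 Hq) as [Hc Ec].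
  unfold eight_map. rewrite <- Ec at 1.
  now rewrite (eight_sigma H8 Hc), (eight_sigma H8' Hc).
Qed.

Lemma eight_map_reach_X a b : L a -> L b ->
  reach_by (fX Z) (fun _ => True) (fun x => L x /\ sw Z x >= 0) a b <->
  reach_by (fX Z') (fun _ => True) (fun x => L' x /\ sw Z' x >= 0)
    (eight_map G G' k a) (eight_map G G' k b).
Proof.
  intros Ha Hb. destruct (eight_increasing H8) as (K1 & K2 & K3 & K4).
  rewrite (eight_reach_X H8 a b Ha Hb).
  rewrite (eight_reach_X H8' _ _ (eight_map_in a Ha) (eight_map_in b Hb)).
  split; intros [x [y [Hx [Hy [Ex Ey]]]]]; exists x, y; (split; [exact Hx|split; [exact Hy|]]);
    (split; [apply (eight_transfer x a)|apply (eight_transfer y b)]); auto;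
    unfold in_span; lra.
Qed.

Lemma eight_map_reach_Y a b : L a -> L b ->
  reach_by (fY Z) (fun _ => True) (fun x => L x /\ sw Z x <= 0) a b <->
  reach_by (fY Z') (fun _ => True) (fun x => L' x /\ sw Z' x <= 0)
    (eight_map G G' k a) (eight_map G G' k b).
Proof.
  intros Ha Hb. destruct (eight_increasing H8) as (K1 & K2 & K3 & K4).
  rewrite (eight_reach_Y H8 a b Ha Hb).
  rewrite (eight_reach_Y H8' _ _ (eight_map_in a Ha) (eight_map_in b Hb)).
  split; intros [x [y [Hx [Hy [Ex Ey]]]]]; exists x, y; (split; [exact Hx|split; [exact Hy|]]);
    (split; [apply (eight_transfer x a)|apply (eight_transfer y b)]); auto;
    unfold in_span; lra.
Qed.

Lemma eight_map_reach_T a b : L a -> L b ->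
  reach_by (ZT Z) (slide_esc Z) (fun x => L x /\ sw Z x = 0) a b <->
  reach_by (ZT Z') (slide_esc Z') (fun x => L' x /\ sw Z' x = 0)
    (eight_map G G' k a) (eight_map G G' k b).
Proof.
  intros Ha Hb.
  rewrite (reach_by_without_condition _ _ _ a b)
    by (intros x [Hx _]; exact (eight_no_sliding H8 Hx)).
  rewrite (reach_by_without_condition _ _ _ (eight_map G G' k a))
    by (intros x [Hx _]; exact (eight_no_sliding H8' Hx)).
  rewrite <- (eight_map_sigma a Ha).
  split; intros [E [_ S]]; (split; [|split; [|exact S]]).
  - now rewrite E.
  - now apply eight_map_in.
  - now rewrite <- (eight_map_cancel a Ha), <- (eight_map_cancel b Hb), E.
  - exact Ha.
Qed.

End EightMap.

Theorem figure_eight_sigma_equiv Z Z' L L' G G' k :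
  figure_eight Z L G k -> figure_eight Z' L' G' k -> sigma_equiv Z L Z' L'.
Proof.
  intros H8 H8'. exists (eight_map G G' k), (eight_map G' G k).
  split; [exact (eight_map_in H8 H8')|].
  split; [exact (eight_map_in H8' H8)|].
  split; [exact (eight_map_cancel H8 H8')|].
  split; [exact (eight_map_cancel H8' H8)|].
  split; [exact (eight_map_continuous H8 H8')|].
  split; [exact (eight_map_continuous H8' H8)|].
  split; [exact (eight_map_sigma H8 H8')|].
  split; [exact (eight_map_reach_X H8 H8')|].
  split; [exact (eight_map_reach_Y H8 H8')|].
  exact (eight_map_reach_T H8 H8').
Qed.

Definition model_knots : knots := Knots (-1/2) 0 (1/2) 1 (3/2).

Definition clamp_half (v : R) : R := Rmin (Rmax v 0) (1/2).

Lemma clamp_half_low v : v <= 0 -> clamp_half v = 0.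
Proof. intro. unfold clamp_half, Rmin, Rmax. repeat destruct Rle_dec; lra. Qed.
Lemma clamp_half_high v : v >= 1/2 -> clamp_half v = 1/2.
Proof. intro. unfold clamp_half, Rmin, Rmax. repeat destruct Rle_dec; lra. Qed.
Lemma clamp_half_mid v : 0 <= v <= 1/2 -> clamp_half v = v.
Proof. intro. unfold clamp_half, Rmin, Rmax. repeat destruct Rle_dec; lra. Qed.
Lemma clamp_half_incr a b : a <= b -> 0 <= clamp_half b - clamp_half a <= b - a.
Proof. intro. unfold clamp_half, Rmin, Rmax. repeat destruct Rle_dec; lra. Qed.

Lemma clamp_half_continuity x : continuity_pt clamp_half x.
Proof.
  apply eps_continuity_pt. intros eps He. exists eps. split; [exact He|]. intros s Hs.
  destruct (Rle_dec x s) as [Hxs|Hxs];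
    [pose proof (clamp_half_incr x s Hxs)|pose proof (clamp_half_incr s x ltac:(lra))];
    apply Rabs_lt_between' in Hs; apply Rabs_lt_between'; lra.
Qed.

Lemma clamp_half_sum x : -1/2 <= x <= 3/2 ->
  clamp_half (x + 1/2) + clamp_half x + clamp_half (x - 1/2) + clamp_half (x - 1) = x + 1/2.
Proof.
  intro Hx. destruct (Rle_dec x 0); [|destruct (Rle_dec x (1/2)); [|destruct (Rle_dec x 1)]].
  - rewrite (clamp_half_mid (x + 1/2)), (clamp_half_low x), (clamp_half_low (x - 1/2)),
      (clamp_half_low (x - 1)) by lra. lra.
  - rewrite (clamp_half_high (x + 1/2)), (clamp_half_mid x), (clamp_half_low (x - 1/2)),
      (clamp_half_low (x - 1)) by lra. lra.
  - rewrite (clamp_half_high (x + 1/2)), (clamp_half_high x), (clamp_half_mid (x - 1/2)),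
      (clamp_half_low (x - 1)) by lra. lra.
  - rewrite (clamp_half_high (x + 1/2)), (clamp_half_high x), (clamp_half_high (x - 1/2)),
      (clamp_half_mid (x - 1)) by lra. lra.
Qed.

(* The piecewise linear map sending the knots of [model_knots] to those of [k]. *)
Definition knot_interp (k : knots) (x : R) : R :=
  kn0 k + 2 * (kn1 k - kn0 k) * clamp_half (x + 1/2) + 2 * (kn2 k - kn1 k) * clamp_half x
  + 2 * (kn3 k - kn2 k) * clamp_half (x - 1/2) + 2 * (kn4 k - kn3 k) * clamp_half (x - 1).

Section KnotInterp.

Variable k : knots.
Hypothesis Hk : increasing_knots k.

Lemma knot_interp_knots :
  knot_interp k (-1/2) = kn0 k /\ knot_interp k 0 = kn1 k /\ knot_interp k (1/2) = kn2 k /\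
  knot_interp k 1 = kn3 k /\ knot_interp k (3/2) = kn4 k.
Proof.
  unfold knot_interp. repeat split.
  - rewrite (clamp_half_mid (-1/2 + 1/2)), (clamp_half_low (-1/2)), (clamp_half_low (-1/2 - 1/2)),
      (clamp_half_low (-1/2 - 1)) by lra. field.
  - rewrite (clamp_half_high (0 + 1/2)), (clamp_half_mid 0), (clamp_half_low (0 - 1/2)),
      (clamp_half_low (0 - 1)) by lra. field.
  - rewrite (clamp_half_high (1/2 + 1/2)), (clamp_half_high (1/2)), (clamp_half_mid (1/2 - 1/2)),
      (clamp_half_low (1/2 - 1)) by lra. field.
  - rewrite (clamp_half_high (1 + 1/2)), (clamp_half_high 1), (clamp_half_high (1 - 1/2)),
      (clamp_half_mid (1 - 1)) by lra. field.
  - rewrite (clamp_half_high (3/2 + 1/2)), (clamp_half_high (3/2)), (clamp_half_high (3/2 - 1/2)),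
      (clamp_half_high (3/2 - 1)) by lra. field.
Qed.

(* Between [a] and [b] the four ramps gain [b - a] in total, so the slope of [knot_interp]
   is at least twice the smallest gap between consecutive knots. *)
Lemma knot_interp_lt a b : -1/2 <= a -> a < b -> b <= 3/2 -> knot_interp k a < knot_interp k b.
Proof.
  intros Ha Hab Hb. destruct Hk as (K1 & K2 & K3 & K4).
  pose proof (clamp_half_sum a ltac:(lra)). pose proof (clamp_half_sum b ltac:(lra)).
  pose proof (clamp_half_incr (a + 1/2) (b + 1/2) ltac:(lra)).
  pose proof (clamp_half_incr a b ltac:(lra)).
  pose proof (clamp_half_incr (a - 1/2) (b - 1/2) ltac:(lra)).
  pose proof (clamp_half_incr (a - 1) (b - 1) ltac:(lra)).
  unfold knot_interp.
  set (g1 := kn1 k - kn0 k). set (g2 := kn2 k - kn1 k).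
  set (g3 := kn3 k - kn2 k). set (g4 := kn4 k - kn3 k).
  destruct (Rmin_pos_le g1 g2) as (M12 & M1 & M2); [unfold g1; lra|unfold g2; lra|].
  destruct (Rmin_pos_le g3 g4) as (M34 & M3 & M4); [unfold g3; lra|unfold g4; lra|].
  destruct (Rmin_pos_le _ _ M12 M34) as (Hm & Hm12 & Hm34).
  set (m := Rmin (Rmin g1 g2) (Rmin g3 g4)) in *.
  assert (K : forall c d, m <= c -> 0 <= d -> m * d <= c * d)
    by (intros; apply Rmult_le_compat_r; lra).
  pose proof (K g1 (clamp_half (b + 1/2) - clamp_half (a + 1/2)) ltac:(lra) ltac:(lra)).
  pose proof (K g2 (clamp_half b - clamp_half a) ltac:(lra) ltac:(lra)).
  pose proof (K g3 (clamp_half (b - 1/2) - clamp_half (a - 1/2)) ltac:(lra) ltac:(lra)).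
  pose proof (K g4 (clamp_half (b - 1) - clamp_half (a - 1)) ltac:(lra) ltac:(lra)).
  assert (m * (b - a) > 0) by (apply Rmult_lt_0_compat; lra).
  nra.
Qed.

Lemma knot_interp_continuity x : continuity_pt (knot_interp k) x.
Proof.
  assert (Hc : forall c, continuity_pt (fun y => clamp_half (y + c)) x).
  { intro c. apply (continuity_pt_comp (fun y => y + c) clamp_half);
      [apply continuity_pt_plus; [apply continuity_pt_id|apply continuity_pt_const; now intros u v]
      |apply clamp_half_continuity]. }
  assert (Hk' : forall c, continuity_pt (fun _ : R => c) x)
    by (intro; apply continuity_pt_const; now intros u v).
  unfold knot_interp.
  repeat apply continuity_pt_plus; try apply continuity_pt_mult; try apply Hk'.
  - apply Hc.
  - apply (continuity_pt_ext (fun y => clamp_half (y + 0)));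
      [intro; now rewrite Rplus_0_r|apply Hc].
  - apply (continuity_pt_ext (fun y => clamp_half (y + - (1/2)))); [reflexivity|apply Hc].
  - apply (continuity_pt_ext (fun y => clamp_half (y + - 1))); [reflexivity|apply Hc].
Qed.

Lemma knot_interp_le a b : -1/2 <= a <= 3/2 -> -1/2 <= b <= 3/2 ->
  a <= b <-> knot_interp k a <= knot_interp k b.
Proof.
  intros Ha Hb. split; intro H.
  - destruct (Req_dec a b) as [->|]; [lra|]. left. apply knot_interp_lt; lra.
  - destruct (Rle_dec a b) as [|Hn]; [assumption|].
    pose proof (knot_interp_lt b a ltac:(lra) ltac:(lra) ltac:(lra)). lra.
Qed.

Lemma knot_interp_span x : -1/2 <= x <= 3/2 -> in_span k (knot_interp k x).
Proof.
  intro Hx. destruct knot_interp_knots as (K0 & _ & _ & _ & K4). unfold in_span.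
  rewrite <- K0, <- K4.
  split; [apply (knot_interp_le (-1/2) x)|apply (knot_interp_le x (3/2))]; lra.
Qed.

Lemma knot_interp_onto t : in_span k t -> exists x, -1/2 <= x <= 3/2 /\ knot_interp k x = t.
Proof.
  intro Ht. destruct knot_interp_knots as (K0 & _ & _ & _ & K4).
  destruct (IVT_gen (knot_interp k) (-1/2) (3/2) t) as [x [Hx Ex]].
  - intro y. apply knot_interp_continuity.
  - destruct Hk as (K1 & K2 & K3 & K5). unfold in_span in Ht.
    rewrite K0, K4, Rmin_left, Rmax_right by lra. lra.
  - exists x. rewrite Rmin_left, Rmax_right in Hx by lra. auto.
Qed.

Lemma knot_interp_eq_iff a b : -1/2 <= a <= 3/2 -> -1/2 <= b <= 3/2 ->
  knot_interp k a = knot_interp k b <-> a = b.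
Proof.
  intros Ha Hb. split; [|now intros ->]. intro E.
  apply Rle_antisym; [apply (knot_interp_le a b)|apply (knot_interp_le b a)]; auto; lra.
Qed.

Lemma knot_interp_is_knot x : -1/2 <= x <= 3/2 ->
  is_knot k (knot_interp k x) <-> is_knot model_knots x.
Proof.
  intro Hx. destruct knot_interp_knots as (K0 & K1 & K2 & K3 & K4).
  unfold is_knot. simpl. rewrite <- K0, <- K1, <- K2, <- K3, <- K4.
  rewrite !knot_interp_eq_iff by lra. tauto.
Qed.

Lemma knot_interp_glued x y : -1/2 <= x <= 3/2 -> -1/2 <= y <= 3/2 ->
  eight_glued k (knot_interp k x) (knot_interp k y) <-> eight_glued model_knots x y.
Proof.
  intros Hx Hy. destruct knot_interp_knots as (K0 & K1 & K2 & K3 & K4).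
  unfold eight_glued. simpl. rewrite <- K0, <- K1, <- K3, <- K4.
  rewrite !knot_interp_eq_iff by lra. tauto.
Qed.

Lemma knot_interp_arc (P : R -> R -> Prop) (i j : R) :
  -1/2 <= i <= j -> j <= 3/2 ->
  (exists t1 t2, knot_interp k i <= t1 <= t2 /\ t2 <= knot_interp k j /\ P t1 t2) <->
  (exists x y, i <= x <= y /\ y <= j /\ P (knot_interp k x) (knot_interp k y)).
Proof.
  intros Hi Hj. destruct knot_interp_knots as (K0 & _ & _ & _ & K4).
  assert (Hs : forall x, -1/2 <= x <= 3/2 -> in_span k (knot_interp k x)) by exact knot_interp_span.
  split.
  - intros [t1 [t2 [H1 [H2 HP]]]].
    pose proof (Hs i ltac:(lra)) as [Si _]. pose proof (Hs j ltac:(lra)) as [_ Sj].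
    destruct (knot_interp_onto t1) as [x [Hx Ex]]; [unfold in_span; lra|].
    destruct (knot_interp_onto t2) as [y [Hy Ey]]; [unfold in_span; lra|].
    subst t1 t2. exists x, y.
    assert (i <= x) by (apply (knot_interp_le i x); lra).
    assert (x <= y) by (apply (knot_interp_le x y); lra).
    assert (y <= j) by (apply (knot_interp_le y j); lra).
    repeat split; auto; lra.
  - intros [x [y [H1 [H2 HP]]]]. exists (knot_interp k x), (knot_interp k y).
    assert (knot_interp k i <= knot_interp k x) by (apply (knot_interp_le i x); lra).
    assert (knot_interp k x <= knot_interp k y) by (apply (knot_interp_le x y); lra).
    assert (knot_interp k y <= knot_interp k j) by (apply (knot_interp_le y j); lra).
    repeat split; auto; lra.
Qed.

End KnotInterp.

Lemma figure_eight_reparam Z L G k : figure_eight Z L G k ->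
  figure_eight Z L (fun x => G (knot_interp k x)) model_knots.
Proof.
  intro H8. pose proof (eight_increasing H8) as Hk.
  destruct (knot_interp_knots k) as (K0 & K1 & K2 & K3 & K4).
  split; unfold in_span; simpl.
  - unfold increasing_knots. simpl. lra.
  - intros x Hx. apply cont_at_comp; [apply knot_interp_continuity; exact Hk|].
    apply (eight_cont H8). now apply knot_interp_span.
  - intro q. rewrite (eight_onto H8). split.
    + intros [t [Ht Et]]. destruct (knot_interp_onto k Hk t Ht) as [x [Hx Ex]].
      exists x. subst t. auto.
    + intros [x [Hx Ex]]. exists (knot_interp k x). split; [now apply knot_interp_span|exact Ex].
  - intros x y Hx Hy. rewrite (eight_glue H8); try now apply knot_interp_span.
    now apply knot_interp_glued.
  - intros x Hx. rewrite (eight_sigma H8); [|now apply knot_interp_span].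
    now apply knot_interp_is_knot.
  - intros a b Ha Hb. rewrite (eight_reach_X H8 a b Ha Hb), <- K0, <- K2.
    apply (knot_interp_arc k Hk (fun t1 t2 => G t1 = a /\ G t2 = b)); lra.
  - intros a b Ha Hb. rewrite (eight_reach_Y H8 a b Ha Hb), <- K2, <- K4.
    apply (knot_interp_arc k Hk (fun t1 t2 => G t1 = a /\ G t2 = b)); lra.
  - exact (eight_no_sliding H8).
Qed.

(** * The model Z2 on Lambda2 *)

Definition F2 (x : R) : R := x ^ 2 / 4 - x ^ 4.

(* One continuous formula for both lobes of Lambda2 (see [eight2_upper], [eight2_lower]):
   the upper lobe is run through for x in [-1/2, 1/2], the lower one backwards for x in
   [1/2, 3/2]. *)
Definition eight2 (x : R) : pt :=
  let u := 1/2 - Rabs (x - 1/2) in (u, u * u * (1/2 + u) * (1/2 - x)).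

Lemma eight2_upper x : x <= 1/2 -> eight2 x = (x, F2 x).
Proof. intro H. unfold eight2, F2. rewrite Rabs_left1 by lra. f_equal; field. Qed.

Lemma eight2_lower x : x >= 1/2 -> eight2 x = (1 - x, - F2 (1 - x)).
Proof. intro H. unfold eight2, F2. rewrite Rabs_pos_eq by lra. f_equal; field. Qed.

Lemma F2_nonneg x : -1/2 <= x <= 1/2 -> F2 x >= 0.
Proof. intro. unfold F2. assert (x * x <= 1/4) by nra. nra. Qed.

Lemma F2_eq0 x : F2 x = 0 -> x = 0 \/ x = 1/2 \/ x = -1/2.
Proof.
  intro H. assert (E : x * x * ((1/2 - x) * (1/2 + x)) = 0) by (rewrite <- H; unfold F2; field).
  apply Rmult_integral in E as [E|E]; [apply Rmult_integral in E as [E|E]; auto|].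
  apply Rmult_integral in E as [E|E]; [right; left|right; right]; lra.
Qed.

Lemma eight2_cont x : cont_at eight2 x.
Proof.
  assert (Cu : continuity_pt (fun y => 1/2 - Rabs (y - 1/2)) x).
  { apply continuity_pt_minus; [apply continuity_pt_const; now intros a b|].
    apply (continuity_pt_comp (fun y => y - 1/2) Rabs); [|apply Rcontinuity_abs].
    apply continuity_pt_minus; [apply continuity_pt_id|apply continuity_pt_const; now intros a b]. }
  apply cont_at_iff. unfold eight2. simpl. split; [exact Cu|].
  repeat apply continuity_pt_mult; try exact Cu.
  - apply continuity_pt_plus; [apply continuity_pt_const; now intros a b|exact Cu].
  - apply continuity_pt_minus; [apply continuity_pt_const; now intros a b|apply continuity_pt_id].
Qed.

Lemma Z2_Xf q : Xf Z2 q = fst q / 2 - 4 * fst q ^ 3.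
Proof.
  unfold Xf, lie, dx, dy, Z2. simpl. rewrite Derive_const, Derive_id. ring.
Qed.

Lemma Z2_Yf q : Yf Z2 q = fst q / 2 - 4 * fst q ^ 3.
Proof.
  unfold Yf, lie, dx, dy, Z2. simpl. rewrite Derive_const, Derive_id. ring.
Qed.

Lemma Lambda2_upper q : Lambda2 q -> snd q >= 0 -> eight2 (fst q) = q.
Proof.
  intros [Hx Hy] Hs. pose proof (F2_nonneg _ Hx). rewrite eight2_upper by lra.
  destruct q as [x y]. simpl in *. f_equal. unfold F2 in *. destruct Hy; lra.
Qed.

Lemma Lambda2_lower q : Lambda2 q -> snd q <= 0 -> eight2 (1 - fst q) = q.
Proof.
  intros [Hx Hy] Hs. pose proof (F2_nonneg _ Hx). rewrite eight2_lower by lra.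
  destruct q as [x y]. simpl in *. replace (1 - (1 - x)) with x by ring.
  f_equal. unfold F2 in *. destruct Hy; lra.
Qed.

Lemma Lambda2_eight2 q : Lambda2 q <-> exists x, -1/2 <= x <= 3/2 /\ eight2 x = q.
Proof.
  split.
  - intro Hq. pose proof Hq as [Hx _]. destruct (Rle_dec 0 (snd q)).
    + exists (fst q). split; [lra|]. apply Lambda2_upper; auto; lra.
    + exists (1 - fst q). split; [lra|]. apply Lambda2_lower; auto; lra.
  - intros [x [Hx <-]]. destruct (Rle_dec x (1/2)).
    + rewrite eight2_upper by lra. split; [simpl; lra|now left].
    + rewrite eight2_lower by lra. split; [simpl; lra|now right].
Qed.

Lemma eight2_glue x y : -1/2 <= x <= 3/2 -> -1/2 <= y <= 3/2 ->
  eight2 x = eight2 y <-> eight_glued model_knots x y.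
Proof.
  intros Hx Hy. unfold eight_glued, model_knots. cbn [kn0 kn1 kn2 kn3 kn4]. split.
  - intro E. destruct (Rle_dec x (1/2)); destruct (Rle_dec y (1/2)).
    + rewrite !eight2_upper in E by lra. injection E. lra.
    + rewrite eight2_upper, eight2_lower in E by lra. injection E as E1 E2.
      assert (F2 x = 0) by (rewrite <- E1 in E2; lra).
      destruct (F2_eq0 x) as [-> | [-> | ->]]; auto; lra.
    + rewrite eight2_lower, eight2_upper in E by lra. injection E as E1 E2.
      assert (F2 y = 0) by (rewrite E1 in E2; lra).
      destruct (F2_eq0 y) as [-> | [-> | ->]]; auto; lra.
    + rewrite !eight2_lower in E by lra. injection E. lra.
  - intros [->|[[-> ->]|[[-> ->]|[[-> ->]|[-> ->]]]]]; [reflexivity| | | |];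
      rewrite ?(eight2_upper (-1/2)), ?(eight2_lower (3/2)), ?(eight2_upper 0), ?(eight2_lower 1)
        by lra; unfold F2; f_equal; field.
Qed.

Lemma eight2_sigma x : -1/2 <= x <= 3/2 -> sw Z2 (eight2 x) = 0 <-> is_knot model_knots x.
Proof.
  intro Hx. change (sw Z2 (eight2 x)) with (snd (eight2 x)).
  unfold is_knot, model_knots. cbn [kn0 kn1 kn2 kn3 kn4]. split.
  - destruct (Rle_dec x (1/2)).
    + rewrite eight2_upper by lra. simpl. intro E. destruct (F2_eq0 x E) as [ | [ | ]]; lra.
    + rewrite eight2_lower by lra. simpl. intro E.
      destruct (F2_eq0 (1 - x)) as [ | [ | ]]; lra.
  - intros [->|[->|[-> | [-> | ->]]]];
      rewrite ?(eight2_upper (-1/2)), ?(eight2_upper 0), ?(eight2_upper (1/2)), ?(eight2_lower 1),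
        ?(eight2_lower (3/2)) by lra; simpl; unfold F2; field.
Qed.

Lemma fst_path_affine (psi : R -> pt) T v : 0 <= T ->
  (forall t, 0 <= t <= T -> cont_at psi t) ->
  (forall t, 0 < t < T -> is_derive (fun s => fst (psi s)) t v) ->
  fst (psi T) = fst (psi 0) + v * T.
Proof.
  intros HT Hc Hd. destruct (MVT_gen (fun s => fst (psi s)) 0 T (fun _ => v)) as [c [_ E]].
  - rewrite Rmin_left, Rmax_right by lra. intros x Hx. apply Hd. lra.
  - rewrite Rmin_left, Rmax_right by lra. intros x Hx.
    exact (proj1 (proj1 (cont_at_iff _ _) (Hc x Hx))).
  - simpl in E. lra.
Qed.

Lemma Z2_reach_X a b : Lambda2 a -> Lambda2 b ->
  reach_by (fX Z2) (fun _ => True) (fun x => Lambda2 x /\ sw Z2 x >= 0) a b <->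
  exists x y, -1/2 <= x <= y /\ y <= 1/2 /\ eight2 x = a /\ eight2 y = b.
Proof.
  intros Ha Hb. split.
  - intros [T [psi [HT [P0 [PT [HS HC]]]]]].
    assert (E : fst (psi T) = fst (psi 0) + 1 * T).
    { apply fst_path_affine; [exact HT|intros t Ht; apply HS, Ht|].
      intros t Ht. exact (proj1 (proj2 (HC t Ht))). }
    destruct (HS 0 ltac:(lra)) as [[_ S0] _]. destruct (HS T ltac:(lra)) as [[_ ST] _].
    rewrite P0 in S0, E. rewrite PT in ST, E. simpl in S0, ST.
    pose proof Ha as [Hxa _]. pose proof Hb as [Hxb _].
    exists (fst a), (fst b). repeat split; try lra; now apply Lambda2_upper.
  - intros [x [y [Hxy [Hy [<- <-]]]]].
    exists (y - x), (fun t => (x + t, F2 (x + t))).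
    split; [lra|split; [rewrite Rplus_0_r, eight2_upper by lra; reflexivity|]].
    split; [rewrite eight2_upper by lra; do 2 f_equal; ring|split].
    + intros t Ht. split; [split|].
      * rewrite <- eight2_upper by lra. apply Lambda2_eight2.
        exists (x + t). split; [lra|reflexivity].
      * simpl. apply F2_nonneg. lra.
      * split; simpl; apply (ex_derive_continuous (K := R_AbsRing) (V := R_NormedModule));
          unfold F2; auto_derive; exact I.
    + intros t Ht. split; [exact I|]. split; simpl; unfold F2; auto_derive; auto; field.
Qed.

Lemma Z2_reach_Y a b : Lambda2 a -> Lambda2 b ->
  reach_by (fY Z2) (fun _ => True) (fun x => Lambda2 x /\ sw Z2 x <= 0) a b <->
  exists x y, 1/2 <= x <= y /\ y <= 3/2 /\ eight2 x = a /\ eight2 y = b.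
Proof.
  intros Ha Hb. split.
  - intros [T [psi [HT [P0 [PT [HS HC]]]]]].
    assert (E : fst (psi T) = fst (psi 0) + -1 * T).
    { apply fst_path_affine; [exact HT|intros t Ht; apply HS, Ht|].
      intros t Ht. exact (proj1 (proj2 (HC t Ht))). }
    destruct (HS 0 ltac:(lra)) as [[_ S0] _]. destruct (HS T ltac:(lra)) as [[_ ST] _].
    rewrite P0 in S0, E. rewrite PT in ST, E. simpl in S0, ST.
    pose proof Ha as [Hxa _]. pose proof Hb as [Hxb _].
    exists (1 - fst a), (1 - fst b). repeat split; try lra; now apply Lambda2_lower.
  - intros [x [y [Hxy [Hy [<- <-]]]]].
    exists (y - x), (fun t => (1 - (x + t), - F2 (1 - (x + t)))).
    split; [lra|split; [rewrite Rplus_0_r, eight2_lower by lra; reflexivity|]].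
    split; [rewrite eight2_lower by lra; do 3 f_equal; ring|split].
    + intros t Ht. split; [split|].
      * rewrite <- eight2_lower by lra. apply Lambda2_eight2.
        exists (x + t). split; [lra|reflexivity].
      * simpl. pose proof (F2_nonneg (1 - (x + t)) ltac:(lra)). lra.
      * split; simpl; apply (ex_derive_continuous (K := R_AbsRing) (V := R_NormedModule));
          unfold F2; auto_derive; exact I.
    + intros t Ht. split; [exact I|]. split; simpl; unfold F2; auto_derive; auto; field.
Qed.

Lemma Z2_no_sliding q : ~ slide_esc Z2 q.
Proof.
  intros [_ H]. rewrite Z2_Xf, Z2_Yf in H.
  pose proof (Rle_0_sqr (fst q / 2 - 4 * fst q ^ 3)). unfold Rsqr in *. lra.
Qed.

Lemma Z2_figure_eight : figure_eight Z2 Lambda2 eight2 model_knots.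
Proof.
  split; unfold in_span; cbn [model_knots kn0 kn1 kn2 kn3 kn4].
  - unfold increasing_knots. simpl. lra.
  - intros x _. apply eight2_cont.
  - exact Lambda2_eight2.
  - exact eight2_glue.
  - exact eight2_sigma.
  - exact Z2_reach_X.
  - exact Z2_reach_Y.
  - intros q _. apply Z2_no_sliding.
Qed.

(** * The 1-homoclinic loop *)

Definition lobe_from_X (Z : psvf) (g : R -> pt) (p : pt) (t s u : R) : Prop :=
  t < s < u /\ sewing Z (g s) /\ Xf Z (g s) < 0 /\
  (forall r, t < r < s -> sw Z (g r) > 0) /\ (forall r, s < r < u -> sw Z (g r) < 0) /\
  g u = p /\ through_Y Z g u.

Definition lobe_from_Y (Z : psvf) (g : R -> pt) (p : pt) (t s u : R) : Prop :=
  t < s < u /\ sewing Z (g s) /\ Xf Z (g s) > 0 /\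
  (forall r, t < r < s -> sw Z (g r) < 0) /\ (forall r, s < r < u -> sw Z (g r) > 0) /\
  g u = p /\ through_X Z g u.

Definition orbit (g : R -> pt) (q : pt) : Prop := exists t, g t = q.

Definition loop_anchor (Z : psvf) (g : R -> pt) (p : pt) (t : R) : Prop :=
  g t = p /\ through_X Z g t.

Set Implicit Arguments.

Record loop_window (Z : psvf) (g : R -> pt) (p : pt) (A t0 s1 u1 s2 : R) : Prop := {
  window_order : A < t0 /\ t0 < s1 /\ s1 < u1 /\ u1 < s2;
  window_cover : forall t, exists t', A <= t' <= s2 /\ g t = g t';
  window_ends : g A = g s2;
  window_p0 : g t0 = p;
  window_p1 : g u1 = p;
  window_pos : forall t, A < t < t0 \/ t0 < t < s1 -> sw Z (g t) > 0;
  window_neg : forall t, s1 < t < u1 \/ u1 < t < s2 -> sw Z (g t) < 0;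
  window_sew1 : sewing Z (g s1) /\ Xf Z (g s1) < 0;
  window_sew2 : sewing Z (g s2) /\ Xf Z (g s2) > 0;
  window_solves_X : forall t, A < t < s1 -> solves (fX Z) g t;
  window_solves_Y : forall t, s1 < t < s2 -> solves (fY Z) g t }.

Unset Implicit Arguments.

Section Loop.

Variables (Z : psvf) (g : R -> pt) (p : pt).
Hypotheses (HZ : is_C1_psvf Z) (Hloop : homoclinic_loop1 Z g p).

Lemma loop_global_traj : global_traj Z g.
Proof. exact (proj1 Hloop). Qed.

Lemma loop_passes t : g t = p -> passes_through Z g t.
Proof. intro Ht. exact (proj1 (proj2 (proj2 (proj2 Hloop)) t Ht)). Qed.

Lemma loop_returns t : g t = p -> exists s u, t < s < u /\ sewing Z (g s) /\ g u = p /\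
  (forall r, t < r < u -> r <> s -> sw Z (g r) <> 0).
Proof. intro Ht. exact (proj2 (proj2 (proj2 (proj2 Hloop)) t Ht)). Qed.

Lemma gap_pos a b r0 : (forall r, a < r < b -> sw Z (g r) <> 0) -> a < r0 < b ->
  sw Z (g r0) > 0 -> forall r, a < r < b -> sw Z (g r) > 0.
Proof.
  intros Hnz H0 Hp r Hr.
  pose proof (no_root_same_sign _ a b r0 r (sw_traj_continuity Z g HZ loop_global_traj) Hnz H0 Hr).
  nra.
Qed.

Lemma gap_neg a b r0 : (forall r, a < r < b -> sw Z (g r) <> 0) -> a < r0 < b ->
  sw Z (g r0) < 0 -> forall r, a < r < b -> sw Z (g r) < 0.
Proof.
  intros Hnz H0 Hp r Hr.
  pose proof (no_root_same_sign _ a b r0 r (sw_traj_continuity Z g HZ loop_global_traj) Hnz H0 Hr).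
  nra.
Qed.

Lemma lobe_from_X_exists t : g t = p -> through_X Z g t -> exists s u, lobe_from_X Z g p t s u.
Proof.
  intros Ht HX. pose proof loop_global_traj as Hg.
  destruct (loop_returns t Ht) as [s [u [Hsu [Hsew [Hu Hnz]]]]].
  exists s, u.
  assert (Hpos : forall r, t < r < s -> sw Z (g r) > 0).
  { destruct (through_X_nonneg Z g t HX) as [e [He He']].
    pose proof (Rmin_pos_le e (s - t) He ltac:(lra)).
    apply (gap_pos t s (t + Rmin e (s - t) / 2)); [intros r Hr; apply Hnz; lra|lra|].
    assert (sw Z (g (t + Rmin e (s - t) / 2)) <> 0) by (apply Hnz; lra).
    assert (sw Z (g (t + Rmin e (s - t) / 2)) >= 0) by (apply He'; lra). lra. }
  assert (Hx : Xf Z (g s) < 0).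
  { destruct (sewing_signs Z _ Hsew) as [[Hx _]|[Hx _]]; [exact Hx|exfalso].
    destruct (crossing_up Z g HZ Hg s Hsew Hx) as [e [He [Hb _]]].
    pose proof (Rmin_pos_le e (s - t) He ltac:(lra)).
    assert (sw Z (g (s - Rmin e (s - t) / 2)) < 0) by (apply Hb; lra).
    assert (sw Z (g (s - Rmin e (s - t) / 2)) > 0) by (apply Hpos; lra). lra. }
  assert (Hneg : forall r, s < r < u -> sw Z (g r) < 0).
  { destruct (crossing_down Z g HZ Hg s Hsew Hx) as [e [He [_ Ha]]].
    pose proof (Rmin_pos_le e (u - s) He ltac:(lra)).
    apply (gap_neg s u (s + Rmin e (u - s) / 2)); [intros r Hr; apply Hnz; lra|lra|].
    apply Ha. lra. }
  refine (conj Hsu (conj Hsew (conj Hx (conj Hpos (conj Hneg (conj Hu _)))))).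
  apply through_Y_of_neg with (d := u - s); [now apply loop_passes|lra|].
  left. intros r Hr. apply Hneg. lra.
Qed.

Lemma lobe_from_Y_exists t : g t = p -> through_Y Z g t -> exists s u, lobe_from_Y Z g p t s u.
Proof.
  intros Ht HY. pose proof loop_global_traj as Hg.
  destruct (loop_returns t Ht) as [s [u [Hsu [Hsew [Hu Hnz]]]]].
  exists s, u.
  assert (Hneg : forall r, t < r < s -> sw Z (g r) < 0).
  { destruct (through_Y_nonpos Z g t HY) as [e [He He']].
    pose proof (Rmin_pos_le e (s - t) He ltac:(lra)).
    apply (gap_neg t s (t + Rmin e (s - t) / 2)); [intros r Hr; apply Hnz; lra|lra|].
    assert (sw Z (g (t + Rmin e (s - t) / 2)) <> 0) by (apply Hnz; lra).
    assert (sw Z (g (t + Rmin e (s - t) / 2)) <= 0) by (apply He'; lra). lra. }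
  assert (Hx : Xf Z (g s) > 0).
  { destruct (sewing_signs Z _ Hsew) as [[Hx _]|[Hx _]]; [exfalso|exact Hx].
    destruct (crossing_down Z g HZ Hg s Hsew Hx) as [e [He [Hb _]]].
    pose proof (Rmin_pos_le e (s - t) He ltac:(lra)).
    assert (sw Z (g (s - Rmin e (s - t) / 2)) > 0) by (apply Hb; lra).
    assert (sw Z (g (s - Rmin e (s - t) / 2)) < 0) by (apply Hneg; lra). lra. }
  assert (Hpos : forall r, s < r < u -> sw Z (g r) > 0).
  { destruct (crossing_up Z g HZ Hg s Hsew Hx) as [e [He [_ Ha]]].
    pose proof (Rmin_pos_le e (u - s) He ltac:(lra)).
    apply (gap_pos s u (s + Rmin e (u - s) / 2)); [intros r Hr; apply Hnz; lra|lra|].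
    apply Ha. lra. }
  refine (conj Hsu (conj Hsew (conj Hx (conj Hneg (conj Hpos (conj Hu _)))))).
  apply through_X_of_pos with (d := u - s); [now apply loop_passes|lra|].
  left. intros r Hr. apply Hpos. lra.
Qed.

Lemma loop_base : exists t0 s1 u1 s2 u2, g t0 = p /\ through_X Z g t0 /\
  lobe_from_X Z g p t0 s1 u1 /\ lobe_from_Y Z g p u1 s2 u2.
Proof.
  destruct (proj1 (proj2 (proj2 Hloop))) as [t Ht].
  assert (HX : exists t0, g t0 = p /\ through_X Z g t0).
  { destruct (passes_through_XY Z g t (loop_passes t Ht)) as [HX|HY]; [now exists t|].
    destruct (lobe_from_Y_exists t Ht HY) as [s [u (_ & _ & _ & _ & _ & Hu & HXu)]].
    now exists u. }
  destruct HX as [t0 [Ht0 HX0]].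
  destruct (lobe_from_X_exists t0 Ht0 HX0) as [s1 [u1 L1]].
  pose proof L1 as (_ & _ & _ & _ & _ & Hu1 & HY1).
  destruct (lobe_from_Y_exists u1 Hu1 HY1) as [s2 [u2 L2]].
  now exists t0, s1, u1, s2, u2.
Qed.

Section Period.

Variables t0 s1 u1 s2 u2 : R.
Hypotheses (H0 : loop_anchor Z g p t0)
  (HL1 : lobe_from_X Z g p t0 s1 u1) (HL2 : lobe_from_Y Z g p u1 s2 u2).

Lemma base_regular t : t0 < t < u2 -> t <> u1 -> sw Z (g t) <> 0 \/ sewing Z (g t).
Proof.
  intros Ht Htu.
  destruct HL1 as (O1 & Sw1 & _ & P1 & N1 & _). destruct HL2 as (O2 & Sw2 & _ & N2 & P2 & _).
  destruct (Rlt_le_dec t s1); [left; specialize (P1 t ltac:(lra)); lra|].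
  destruct (Req_dec t s1) as [->|]; [now right|].
  destruct (Rlt_le_dec t u1); [left; specialize (N1 t ltac:(lra)); lra|].
  destruct (Rlt_le_dec t s2); [left; specialize (N2 t ltac:(lra)); lra|].
  destruct (Req_dec t s2) as [->|]; [now right|].
  left. specialize (P2 t ltac:(lra)). lra.
Qed.

(* Along the base period [t0, u2], the forward field is forced at every time: by the point
   itself away from p, and by the side of Sigma the trajectory comes from at p. *)
Lemma base_field_after t t' : g t = g t' -> t0 <= t' < u2 ->
  (t' = t0 -> through_X Z g t) -> (t' = u1 -> through_Y Z g t) ->
  exists W, locally_lipschitz W /\ solves_after W g t /\ solves_after W g t'.
Proof.
  intros E Ht' HX HY. pose proof loop_global_traj as Hg. destruct HZ as (_ & CX & CY).
  destruct (Req_dec t' t0) as [->|N0].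
  { exists (fX Z). split; [now apply C1_field_locally_lipschitz|].
    split; apply solves_around, through_X_solves; auto. exact (proj2 H0). }
  destruct (Req_dec t' u1) as [->|N1].
  { exists (fY Z). split; [now apply C1_field_locally_lipschitz|].
    split; apply solves_around, through_Y_solves; auto.
    now destruct HL1 as (_ & _ & _ & _ & _ & _ & HY1). }
  assert (Hreg : sw Z (g t') <> 0 \/ sewing Z (g t')) by (apply base_regular; lra).
  exists (field_after Z (g t')). split; [now apply field_after_lipschitz|].
  split; [rewrite <- E in Hreg |- *|]; now apply regular_field_after.
Qed.

Lemma base_field_before t t' : g t = g t' -> t0 < t' <= u2 ->
  (t' = u2 -> through_X Z g t) -> (t' = u1 -> through_Y Z g t) ->
  exists W, locally_lipschitz W /\ solves_before W g t /\ solves_before W g t'.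
Proof.
  intros E Ht' HX HY. pose proof loop_global_traj as Hg. destruct HZ as (_ & CX & CY).
  destruct (Req_dec t' u2) as [->|N0].
  { exists (fX Z). split; [now apply C1_field_locally_lipschitz|].
    split; apply solves_around, through_X_solves; auto.
    now destruct HL2 as (_ & _ & _ & _ & _ & _ & HX2). }
  destruct (Req_dec t' u1) as [->|N1].
  { exists (fY Z). split; [now apply C1_field_locally_lipschitz|].
    split; apply solves_around, through_Y_solves; auto.
    now destruct HL1 as (_ & _ & _ & _ & _ & _ & HY1). }
  assert (Hreg : sw Z (g t') <> 0 \/ sewing Z (g t')) by (apply base_regular; lra).
  exists (field_before Z (g t')). split; [now apply field_before_lipschitz|].
  split; [rewrite <- E in Hreg |- *|]; now apply regular_field_before.
Qed.

Lemma period_forward tau : loop_anchor Z g p tau ->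
  (forall r, 0 <= r <= u2 - t0 -> g (tau + r) = g (t0 + r)) /\ loop_anchor Z g p (tau + (u2 - t0)).
Proof.
  intros [Htau HXtau]. pose proof loop_global_traj as Hg.
  destruct H0 as [Ht0 _].
  destruct HL1 as (O1 & _ & _ & _ & N1 & Hu1 & _). destruct HL2 as (O2 & _ & _ & _ & P2 & Hu2 & _).
  set (c := t0 - tau).
  assert (Main : forall t, tau <= t <= tau + (u2 - t0) -> g t = g (t + c)).
  { apply (shift_agree_forward Z g Hg);
      [lra|unfold c; replace (tau + (t0 - tau)) with t0 by ring; congruence|].
    intros t Ht HQ. apply base_field_after; [apply HQ; lra|unfold c; lra| |].
    - intro E. now replace t with tau by (unfold c in E; lra).
    - intro E. apply through_Y_of_neg with (d := u1 - s1); [|lra|].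
      + apply loop_passes. rewrite (HQ t), E by lra. exact Hu1.
      + left. intros r Hr. rewrite (HQ r) by (unfold c in *; lra). apply N1. unfold c in *; lra. }
  split.
  - intros r Hr. rewrite Main by lra. unfold c. f_equal. ring.
  - assert (Hp : g (tau + (u2 - t0)) = p).
    { rewrite Main by lra. unfold c. now replace (tau + (u2 - t0) + (t0 - tau)) with u2 by ring. }
    split; [exact Hp|]. apply through_X_of_pos with (d := u2 - s2); [now apply loop_passes|lra|].
    left. intros r Hr. rewrite Main by lra. apply P2. unfold c. lra.
Qed.

Lemma period_backward tau : loop_anchor Z g p tau ->
  (forall r, 0 <= r <= u2 - t0 -> g (tau - (u2 - t0) + r) = g (t0 + r)) /\
  loop_anchor Z g p (tau - (u2 - t0)).
Proof.
  intros [Htau HXtau]. pose proof loop_global_traj as Hg.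
  destruct H0 as [Ht0 _].
  destruct HL1 as (O1 & _ & _ & P1 & _ & Hu1 & _). destruct HL2 as (O2 & _ & _ & N2 & _ & Hu2 & _).
  set (c := u2 - tau).
  assert (Main : forall t, tau - (u2 - t0) <= t <= tau -> g t = g (t + c)).
  { apply (shift_agree_backward Z g Hg);
      [lra|unfold c; replace (tau + (u2 - tau)) with u2 by ring; congruence|].
    intros t Ht HQ. apply base_field_before; [apply HQ; lra|unfold c; lra| |].
    - intro E. now replace t with tau by (unfold c in E; lra).
    - intro E. apply through_Y_of_neg with (d := s2 - u1); [|lra|].
      + apply loop_passes. rewrite (HQ t), E by lra. exact Hu1.
      + right. intros r Hr. rewrite (HQ r) by (unfold c in *; lra). apply N2. unfold c in *; lra. }
  split.
  - intros r Hr. rewrite Main by lra. unfold c. f_equal. ring.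
  - assert (Hp : g (tau - (u2 - t0)) = p).
    { rewrite Main by lra. unfold c. now replace (tau - (u2 - t0) + (u2 - tau)) with t0 by ring. }
    split; [exact Hp|]. apply through_X_of_pos with (d := s1 - t0); [now apply loop_passes|lra|].
    right. intros r Hr. rewrite Main by lra. apply P1. unfold c. lra.
Qed.

Lemma anchors_forward n : loop_anchor Z g p (t0 + INR n * (u2 - t0)).
Proof.
  induction n as [|n IH]; [simpl; now rewrite Rmult_0_l, Rplus_0_r|].
  rewrite S_INR.
  replace (t0 + (INR n + 1) * (u2 - t0)) with (t0 + INR n * (u2 - t0) + (u2 - t0)) by ring.
  exact (proj2 (period_forward _ IH)).
Qed.

Lemma anchors_backward n : loop_anchor Z g p (t0 - INR n * (u2 - t0)).
Proof.
  induction n as [|n IH]; [simpl; now rewrite Rmult_0_l, Rminus_0_r|].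
  rewrite S_INR.
  replace (t0 - (INR n + 1) * (u2 - t0)) with (t0 - INR n * (u2 - t0) - (u2 - t0)) by ring.
  exact (proj2 (period_backward _ IH)).
Qed.

Lemma base_period_cover t : exists t', t0 <= t' <= u2 /\ g t = g t'.
Proof.
  destruct HL1 as (O1 & _). destruct HL2 as (O2 & _).
  set (P := u2 - t0). assert (HP : P > 0) by (unfold P; lra).
  destruct (INR_archimed P (Rabs (t - t0)) HP) as [n Hn].
  assert (Hn' : Rabs (t - t0) <= INR n * P) by lra. clear Hn.
  destruct (Rle_dec t0 t) as [Hge|Hlt].
  - rewrite Rabs_pos_eq in Hn' by lra. revert t Hge Hn'.
    induction n as [|n IH]; intros t Hge Hn; [exists t0; split; [lra|f_equal; simpl in Hn; lra]|].
    rewrite S_INR in Hn. destruct (Rle_dec t (t0 + INR n * P)); [apply IH; lra|].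
    exists (t0 + (t - (t0 + INR n * P))). split; [unfold P in *; lra|].
    rewrite <- (proj1 (period_forward _ (anchors_forward n))) by (unfold P in *; lra).
    f_equal. unfold P. ring.
  - rewrite Rabs_left in Hn' by lra. revert t Hlt Hn'.
    induction n as [|n IH]; intros t Hlt Hn; [simpl in Hn; lra|].
    rewrite S_INR in Hn. destruct (Rle_dec (t0 - INR n * P) t) as [Hle|Hgt].
    + destruct (Req_dec t (t0 - INR n * P)) as [->|]; [|apply IH; lra].
      exists t0. split; [lra|]. unfold P. now rewrite (proj1 (anchors_backward n)), (proj1 H0).
    + exists (t0 + (t - (t0 - INR n * P - P))). split; [unfold P in *; lra|].
      rewrite <- (proj1 (period_backward _ (anchors_backward n))) by (unfold P in *; lra).
      f_equal. unfold P. ring.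
Qed.

Lemma base_window : loop_window Z g p (s2 - (u2 - t0)) t0 s1 u1 s2.
Proof.
  pose proof loop_global_traj as Hg. destruct H0 as [Ht0 HX0].
  pose proof HL1 as (O1 & Sw1 & X1 & P1 & N1 & Hu1 & HY1).
  pose proof HL2 as (O2 & Sw2 & X2 & N2 & P2 & Hu2 & HX2).
  set (P := u2 - t0). set (A := s2 - P).
  assert (Hper : forall t, A <= t <= t0 -> g t = g (t + P)).
  { intros t Ht. destruct (period_backward t0 (conj Ht0 HX0)) as [Hb _].
    specialize (Hb (t - (t0 - P))). unfold A, P in *.
    replace (t0 - (u2 - t0) + (t - (t0 - (u2 - t0)))) with t in Hb by ring.
    rewrite Hb by lra. f_equal. ring. }
  assert (Hpos : forall t, A < t < t0 \/ t0 < t < s1 -> sw Z (g t) > 0).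
  { intros t [Ht|Ht]; [rewrite Hper by lra; apply P2; unfold A, P in *; lra|apply P1; lra]. }
  assert (Hneg : forall t, s1 < t < u1 \/ u1 < t < s2 -> sw Z (g t) < 0).
  { intros t [Ht|Ht]; [apply N1|apply N2]; lra. }
  split; auto.
  - unfold A, P. lra.
  - intro t. destruct (base_period_cover t) as [t' [Ht' E]].
    destruct (Rle_dec t' s2); [exists t'; split; [unfold A, P; lra|exact E]|].
    exists (t' - P). split; [unfold A, P in *; lra|].
    rewrite E, (Hper (t' - P)) by (unfold A, P in *; lra). f_equal. ring.
  - rewrite Hper by (unfold A, P; lra). f_equal. unfold A. ring.
  - intros t Ht. destruct (Req_dec t t0) as [->|].
    + destruct (through_X_solves Z g HZ Hg t0 HX0) as [e [He He']]. apply He'. lra.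
    + apply (solves_X_of_pos Z g HZ Hg), Hpos. lra.
  - intros t Ht. destruct (Req_dec t u1) as [->|].
    + destruct (through_Y_solves Z g HZ Hg u1 HY1) as [e [He He']]. apply He'. lra.
    + apply (solves_Y_of_neg Z g HZ Hg), Hneg. lra.
Qed.

End Period.

Lemma loop_window_exists : exists A t0 s1 u1 s2, loop_window Z g p A t0 s1 u1 s2.
Proof.
  destruct loop_base as [t0 [s1 [u1 [s2 [u2 (Ht0 & HX0 & HL1 & HL2)]]]]].
  exists (s2 - (u2 - t0)), t0, s1, u1, s2. now apply base_window.
Qed.

Section Window.

Variables A t0 s1 u1 s2 : R.
Hypothesis HW : loop_window Z g p A t0 s1 u1 s2.

Let k := Knots A t0 s1 u1 s2.

Lemma p_on_sigma : sw Z p = 0 /\ Xf Z p = 0.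
Proof. destruct Hloop as (_ & [[[Hs [Hx _]] _] _]). split; assumption. Qed.

Lemma window_zero t : A <= t <= s2 -> sw Z (g t) = 0 <-> is_knot k t.
Proof.
  intro Ht. destruct HW as [[O1 [O2 [O3 O4]]] _ Hends Hp0 Hp1 Hpos Hneg [Sw1 _] [Sw2 _] _ _].
  destruct p_on_sigma as [Sp _]. unfold is_knot, k; simpl. split.
  - intro S0. destruct (Req_dec t A) as [|NA]; [now left|].
    destruct (Req_dec t t0) as [|N0]; [now right; left|].
    destruct (Req_dec t s1) as [|N1]; [now right; right; left|].
    destruct (Req_dec t u1) as [|N2]; [now right; right; right; left|].
    destruct (Req_dec t s2) as [|N3]; [now right; right; right; right|exfalso].
    destruct (Rlt_le_dec t s1);
      [pose proof (Hpos t ltac:(lra))|pose proof (Hneg t ltac:(lra))]; lra.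
  - intros [-> | [-> | [-> | [-> | ->]]]].
    + rewrite Hends. apply Sw2.
    + now rewrite Hp0.
    + apply Sw1.
    + now rewrite Hp1.
    + apply Sw2.
Qed.

Lemma window_nonneg t : A <= t <= s1 -> sw Z (g t) >= 0.
Proof.
  intro Ht. destruct (window_order HW) as (O1 & O2 & O3 & O4).
  destruct (Req_dec t A) as [->|];
    [|destruct (Req_dec t t0) as [->|]; [|destruct (Req_dec t s1) as [->|]]].
  - right. apply window_zero; [lra|now left].
  - right. apply window_zero; [lra|now right; left].
  - right. apply window_zero; [lra|now right; right; left].
  - left. apply (window_pos HW). lra.
Qed.

Lemma window_nonpos t : s1 <= t <= s2 -> sw Z (g t) <= 0.
Proof.
  intro Ht. destruct (window_order HW) as (O1 & O2 & O3 & O4).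
  destruct (Req_dec t s1) as [->|];
    [|destruct (Req_dec t u1) as [->|]; [|destruct (Req_dec t s2) as [->|]]].
  - right. apply window_zero; [lra|now right; right; left].
  - right. apply window_zero; [lra|now right; right; right; left].
  - right. apply window_zero; [lra|now right; right; right; right].
  - left. apply (window_neg HW). lra.
Qed.

Lemma window_neg_arc t : A <= t <= s2 -> sw Z (g t) < 0 -> s1 < t < s2 /\ t <> u1.
Proof.
  intros Ht Sn. destruct (window_order HW) as (O1 & O2 & O3 & O4).
  assert (NK : ~ is_knot k t) by (intro K; apply (window_zero t Ht) in K; lra).
  unfold is_knot, k in NK; simpl in NK.
  destruct (Rle_dec t s1); [pose proof (window_nonneg t ltac:(lra)); lra|].
  assert (t < s2) by (destruct (Req_dec t s2); [exfalso; apply NK; tauto|lra]).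
  split; [lra|intro; apply NK; tauto].
Qed.

Lemma window_pos_arc t : A <= t <= s2 -> sw Z (g t) > 0 -> A < t < s1 /\ t <> t0.
Proof.
  intros Ht Sp. destruct (window_order HW) as (O1 & O2 & O3 & O4).
  assert (NK : ~ is_knot k t) by (intro K; apply (window_zero t Ht) in K; lra).
  unfold is_knot, k in NK; simpl in NK.
  destruct (Rle_dec s1 t); [pose proof (window_nonpos t ltac:(lra)); lra|].
  assert (A < t) by (destruct (Req_dec t A); [exfalso; apply NK; tauto|lra]).
  split; [lra|intro; apply NK; tauto].
Qed.

Lemma window_knot_Xf t : is_knot k t ->
  (Xf Z (g t) > 0 /\ (t = A \/ t = s2)) \/ (Xf Z (g t) = 0 /\ (t = t0 \/ t = u1)) \/
  (Xf Z (g t) < 0 /\ t = s1).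
Proof.
  destruct p_on_sigma as [_ Xp].
  destruct HW as [_ _ Hends Hp0 Hp1 _ _ [_ Xs1] [_ Xs2] _ _].
  unfold is_knot, k; simpl. intros [-> | [-> | [-> | [-> | ->]]]].
  - left. rewrite Hends. auto.
  - right; left. rewrite Hp0. auto.
  - right; right. auto.
  - right; left. rewrite Hp1. auto.
  - left. auto.
Qed.

(* Off Sigma two arcs of one field meet nowhere; on Sigma the three points of the loop
   are told apart by the sign of [Xf]. *)
Lemma window_glue t t' : A <= t <= s2 -> A <= t' <= s2 -> g t = g t' <-> eight_glued k t t'.
Proof.
  intros Ht Ht'. pose proof loop_global_traj as Hg. destruct p_on_sigma as [Sp Xp].
  destruct HZ as (_ & CX & CY). apply C1_field_locally_lipschitz in CX, CY.
  pose proof (window_zero t Ht) as Z1. pose proof (window_zero t' Ht') as Z2.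
  pose proof (window_neg_arc t Ht) as Y1. pose proof (window_neg_arc t' Ht') as Y2.
  pose proof (window_pos_arc t Ht) as X1. pose proof (window_pos_arc t' Ht') as X2.
  destruct HW as [[O1 [O2 [O3 O4]]] _ Hends Hp0 Hp1 Hpos Hneg [[Sw1 _] Xs1] [[Sw2 _] Xs2] HsX HsY].
  unfold eight_glued, in_Sigma in *. split.
  - intro E. assert (ES : sw Z (g t) = sw Z (g t')) by now rewrite E.
    assert (EX : Xf Z (g t) = Xf Z (g t')) by now rewrite E.
    destruct (Rtotal_order (sw Z (g t)) 0) as [Sn|[S0|Sn]].
    + left. apply (two_arcs_injective Z g Hg (fY Z) s1 u1 s2 CY ltac:(lra)); auto;
        [|now rewrite Hp1|intro E'; rewrite Hp1 in E'; rewrite <- E' in Xs2; lra|apply Y1; lra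
        |apply Y2; lra|apply Y1; lra|apply Y2; lra].
      intros r Hr Hru. split; [apply HsY; lra|]. pose proof (Hneg r ltac:(lra)). lra.
    + assert (K1 : is_knot k t) by now apply Z1.
      assert (K2 : is_knot k t') by (apply Z2; lra).
      destruct (window_knot_Xf t K1) as [[Xa [-> | ->]] | [[Xa [-> | ->]] | [Xa ->]]];
        destruct (window_knot_Xf t' K2) as [[Xb [-> | ->]] | [[Xb [-> | ->]] | [Xb ->]]];
        unfold k; simpl; (tauto || (exfalso; lra)).
    + left. apply (two_arcs_injective Z g Hg (fX Z) A t0 s1 CX ltac:(lra)); auto;
        [|now rewrite Hp0|intro E'; rewrite Hp0 in E'; rewrite <- E' in Xs1; lra|apply X1; lra
        |apply X2; lra|apply X1; lra|apply X2; lra].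
      intros r Hr Hru. split; [apply HsX; lra|]. pose proof (Hpos r ltac:(lra)). lra.
  - unfold k; simpl. intros [-> | [[-> ->] | [[-> ->] | [[-> ->] | [-> ->]]]]]; congruence.
Qed.

Lemma window_upper_point q : orbit g q -> sw Z q >= 0 -> exists t, A <= t <= s1 /\ g t = q.
Proof.
  intros [t <-] Hs. destruct (window_cover HW t) as [t' [Ht' E]].
  rewrite E in Hs |- *.
  destruct (window_order HW) as (O1 & O2 & O3 & O4).
  destruct (Rle_dec t' s1); [now exists t'|].
  assert (K : is_knot k t').
  { apply (window_zero t' ltac:(lra)). pose proof (window_nonpos t' ltac:(lra)). lra. }
  unfold is_knot, k in K; simpl in K.
  destruct K as [-> | [-> | [-> | [-> | ->]]]]; try lra.
  - exists t0. split; [lra|]. now rewrite (window_p0 HW), (window_p1 HW).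
  - exists A. split; [lra|]. apply (window_ends HW).
Qed.

Lemma window_lower_point q : orbit g q -> sw Z q <= 0 -> exists t, s1 <= t <= s2 /\ g t = q.
Proof.
  intros [t <-] Hs. destruct (window_cover HW t) as [t' [Ht' E]].
  rewrite E in Hs |- *.
  destruct (window_order HW) as (O1 & O2 & O3 & O4).
  destruct (Rle_dec s1 t'); [now exists t'|].
  assert (K : is_knot k t').
  { apply (window_zero t' ltac:(lra)). pose proof (window_nonneg t' ltac:(lra)). lra. }
  unfold is_knot, k in K; simpl in K.
  destruct K as [-> | [-> | [-> | [-> | ->]]]]; try lra.
  - exists s2. split; [lra|]. symmetry. apply (window_ends HW).
  - exists u1. split; [lra|]. now rewrite (window_p0 HW), (window_p1 HW).
Qed.

Lemma window_reach_X a b :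
  reach_by (fX Z) (fun _ => True) (fun x => orbit g x /\ sw Z x >= 0) a b <->
  exists t1 t2, A <= t1 <= t2 /\ t2 <= s1 /\ g t1 = a /\ g t2 = b.
Proof.
  destruct (window_order HW) as (O1 & O2 & O3 & O4).
  destruct (window_sew1 HW) as [[Sw1 _] Xs1].
  apply (reach_by_arc Z g HZ loop_global_traj); [exact (proj1 (proj2 HZ))|lra| | | |exact Sw1|
    fold (Xf Z); lra| ].
  - exact (window_solves_X HW).
  - intros t Ht. split; [now exists t|now apply window_nonneg].
  - intros q [Hq Hs]. now apply window_upper_point.
  - intros q [_ Hs]. fold (Xf Z). nra.
Qed.

Lemma window_reach_Y a b :
  reach_by (fY Z) (fun _ => True) (fun x => orbit g x /\ sw Z x <= 0) a b <->
  exists t1 t2, s1 <= t1 <= t2 /\ t2 <= s2 /\ g t1 = a /\ g t2 = b.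
Proof.
  destruct (window_order HW) as (O1 & O2 & O3 & O4).
  destruct (window_sew2 HW) as [Hsew Xs2].
  assert (Ys2 : Yf Z (g s2) > 0) by (destruct (sewing_signs Z _ Hsew); lra).
  destruct Hsew as [Sw2 _].
  apply (reach_by_arc Z g HZ loop_global_traj); [exact (proj2 (proj2 HZ))|lra| | | |exact Sw2|
    fold (Yf Z); lra| ].
  - intros t Ht. apply (window_solves_Y HW). lra.
  - intros t Ht. split; [now exists t|now apply window_nonpos].
  - intros q [Hq Hs]. now apply window_lower_point.
  - intros q [_ Hs]. fold (Yf Z). nra.
Qed.

Lemma window_no_sliding q : orbit g q -> ~ slide_esc Z q.
Proof.
  intros Hq [S0 Hsl].
  destruct (window_upper_point q Hq ltac:(unfold in_Sigma in S0; lra)) as [t [Ht <-]].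
  destruct (window_order HW) as (O1 & O2 & O3 & O4).
  apply window_zero in S0; [|lra].
  destruct (window_knot_Xf t S0) as [[_ [-> | ->]] | [[Xa _] | [_ ->]]].
  - rewrite (window_ends HW) in Hsl. destruct (window_sew2 HW) as [[_ Hp] _]. lra.
  - destruct (window_sew2 HW) as [[_ Hp] _]. lra.
  - rewrite Xa in Hsl. lra.
  - destruct (window_sew1 HW) as [[_ Hp] _]. lra.
Qed.

Lemma window_figure_eight : figure_eight Z (orbit g) g k.
Proof.
  destruct (window_order HW) as (O1 & O2 & O3 & O4).
  split; unfold in_span, k; simpl.
  - unfold increasing_knots. simpl. lra.
  - intros x _. apply (global_traj_cont Z g loop_global_traj).
  - intro q. split; [intros [t <-]|intros [x [_ E]]; now exists x].
    destruct (window_cover HW t) as [t' [Ht' E]]. now exists t'.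
  - exact window_glue.
  - exact window_zero.
  - intros a b _ _. exact (window_reach_X a b).
  - intros a b _ _. exact (window_reach_Y a b).
  - exact window_no_sliding.
Qed.

End Window.

Lemma loop_figure_eight : exists k, figure_eight Z (orbit g) g k.
Proof.
  destruct loop_window_exists as [A [t0 [s1 [u1 [s2 HW]]]]].
  exists (Knots A t0 s1 u1 s2). exact (window_figure_eight A t0 s1 u1 s2 HW).
Qed.

End Loop.

Theorem theoremB :
  forall (Zt : psvf) (g : R -> pt) (p : pt),
    is_psvf Zt ->
    homoclinic_loop1 Zt g p ->
    sigma_equiv Z2 Lambda2 Zt (fun q => exists t : R, g t = q).
Proof.
  intros Zt g p HZ Hloop.
  destruct (loop_figure_eight Zt g p (is_psvf_C1 Zt HZ) Hloop) as [k Hk].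
  apply (figure_eight_sigma_equiv _ _ _ _ eight2 (fun x => g (knot_interp k x)) model_knots).
  - exact Z2_figure_eight.
  - now apply figure_eight_reparam.
Qed.
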